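(* Let $\Omega=(x_l,x_r)\times(x_b,x_t)\subset\mathbb{R}^2$, $T>0$, and let $u:\overline{\Omega}\times[0,T]\to\mathbb{C}$ be such that $u$, $\partial_t u$ and all spatial partial derivatives of $u$ up to order $2$ are continuous on $\overline{\Omega}\times[0,T]$, $u(\mathbf{x},0)=0$ for all $\mathbf{x}\in\partial\Omega$, and $i\partial_t u+\partial_{x_1}^2u+\partial_{x_2}^2u=0$ on $\overline{\Omega}\times(0,T]$. Suppose that on each closed edge the high-frequency boundary condition holds: $$\partial_n u+e^{-i\pi/4}\partial_t^{1/2}u-\tfrac12 e^{i\pi/4}\,\partial_{x_2}^2\partial_t^{-1/2}u=0\ \text{ on }\overline{\Gamma_l}\cup\overline{\Gamma_r},\qquad \partial_n u+e^{-i\pi/4}\partial_t^{1/2}u-\tfrac12 e^{i\pi/4}\,\partial_{x_1}^2\partial_t^{-1/2}u=0\ \text{ on }\overline{\Gamma_b}\cup\overline{\Gamma_t},$$ for $t\in(0,T]$. Then at each corner $c=\overline{\Gamma_a}\cap\overline{\Gamma_{a'}}$ (with $a\in\{l,r\}$, $a'\in\{b,t\}$) one has, for $t\in(0,T]$, $$\partial_{n_a}u(c,t)+\partial_{n_{a'}}u(c,t)+\tfrac{3}{2}e^{-i\pi/4}\,\partial_t^{1/2}u(c,t)=0,$$ where $\partial_{n_a}$ and $\partial_{n_{a'}}$ are the outward normal derivatives of the two edges meeting at $c$.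
   Context: Edges: $\Gamma_l=\{x_l\}\times(x_b,x_t)$, $\Gamma_r=\{x_r\}\times(x_b,x_t)$, $\Gamma_b=(x_l,x_r)\times\{x_b\}$, $\Gamma_t=(x_l,x_r)\times\{x_t\}$; $\partial_n$ is the outward normal derivative (so $\partial_n=\partial_{x_1}$ on $\Gamma_r$, $-\partial_{x_1}$ on $\Gamma_l$, $\partial_{x_2}$ on $\Gamma_t$, $-\partial_{x_2}$ on $\Gamma_b$), extended by continuity to the closed edges. Fractional operators in time (acting pointwise in $\mathbf{x}$): $\partial_t^{-1/2}f(t)=\frac{1}{\sqrt\pi}\int_0^t\frac{f(s)}{\sqrt{t-s}}\,ds$ and $\partial_t^{1/2}f=\frac{d}{dt}\,\partial_t^{-1/2}f$. *)

From Stdlib Require Import Reals.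
From Coquelicot Require Import Coquelicot.
Open Scope R_scope.

Definition cexpi (theta : R) : C := (cos theta, sin theta).

(* Derivative of f : R -> C at x, taken within the set S (one-sided at
   endpoints of closed intervals): the limit of (f(x+h)-f(x))/h as h -> 0
   with h <> 0 and x+h in S. *)
Definition is_deriv_on (S : R -> Prop) (f : R -> C) (x : R) (l : C) : Prop :=
  filterlim (fun h : R => Cmult (RtoC (/ h)) (Cminus (f (x + h)) (f x)))
    (within (fun h : R => h <> 0 /\ S (x + h)) (locally 0)) (locally l).

Definition is_deriv2_on (S : R -> Prop) (f : R -> C) (x : R) (l : C) : Prop :=
  exists g : R -> C, (forall y, S y -> is_deriv_on S f y (g y)) /\ is_deriv_on S g x l.

Definition Icc (a b : R) (y : R) : Prop := a <= y <= b.
Definition Ioc (a b : R) (y : R) : Prop := a < y <= b.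

Definition Cyl (xl xr xb xt T : R) (p : R * R * R) : Prop :=
  Icc xl xr (fst (fst p)) /\ Icc xb xt (snd (fst p)) /\ Icc 0 T (snd p).

Definition cont_on_cyl (xl xr xb xt T : R) (f : R -> R -> R -> C) : Prop :=
  forall p : R * R * R, Cyl xl xr xb xt T p ->
    filterlim (fun q : R * R * R => f (fst (fst q)) (snd (fst q)) (snd q))
      (within (Cyl xl xr xb xt T) (locally p))
      (locally (f (fst (fst p)) (snd (fst p)) (snd p))).

(* Riemann-Liouville half integral, as an improper integral singular at s = t:
   is_Ihalf f t v  <->  v = 1/sqrt(pi) * int_0^t f(s)/sqrt(t-s) ds. *)
Definition is_Ihalf (f : R -> C) (t : R) (v : C) : Prop :=
  exists I : C,
    is_RInt_gen (V := C_R_NormedModule)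
      (fun s : R => Cmult (RtoC (/ sqrt (t - s))) (f s)) (at_point 0) (at_left t) I
    /\ v = Cmult (RtoC (/ sqrt PI)) I.

(* Substituting s = t (1 - r^2) writes the half integral W = d_t^{-1/2} u as
   (2 sqrt t / sqrt pi) * int_0^1 u(x, t (1 - r^2)) dr, whose integrand is continuous. W can then
   be differentiated under the integral sign: its second derivatives in x1 and x2 are the half
   integrals of u_11 and u_22 and, because u vanishes at t = 0 on the boundary, its time
   derivative is the half integral of u_t. At a corner the Schroedinger equation thus gives
   d_1^2 W + d_2^2 W = -i d_t W; adding the two edge conditions there and using
   e^{i pi/4} i = -e^{-i pi/4} turns the coefficient 2 e^{-i pi/4} of d_t W into
   (3/2) e^{-i pi/4}. *)

From Stdlib Require Import Reals.
From Coquelicot Require Import Coquelicot.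
From Stdlib Require Import Lra ClassicalEpsilon.
Open Scope R_scope.

Lemma norm_C (z : C) : @norm R_AbsRing C_R_NormedModule z = Cmod z.
Proof. now rewrite Cmod_norm. Qed.

Lemma minus_C (x y : C) : @minus C_R_NormedModule x y = Cminus x y.
Proof. reflexivity. Qed.

Lemma opp_C (x : C) : @opp C_R_NormedModule x = Copp x.
Proof. reflexivity. Qed.

Lemma scal_C (r : R) (z : C) : @scal R_Ring C_R_NormedModule r z = Cmult (RtoC r) z.
Proof.
  destruct z; unfold scal; simpl; unfold prod_scal, Cmult, RtoC; simpl.
  f_equal; unfold scal; simpl; unfold mult; simpl; ring.
Qed.

Lemma ball_Rabs (x e y : R) : ball x e y <-> Rabs (y - x) < e.
Proof. reflexivity. Qed.

Lemma Cmod_lt_all_eq0 (z : C) : (forall eps, 0 < eps -> Cmod z < eps) -> z = RtoC 0.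
Proof.
  intro H. apply Cmod_eq_0. destruct (Cmod_ge_0 z) as [Hp|He]; [|auto].
  specialize (H _ Hp). lra.
Qed.

Lemma Cmod_minus_triangle (a b c : C) :
  Cmod (Cminus a c) <= Cmod (Cminus a b) + Cmod (Cminus b c).
Proof.
  replace (Cminus a c) with (Cplus (Cminus a b) (Cminus b c)) by ring. apply Cmod_triangle.
Qed.

Lemma Cmod_minus_sym (a b : C) : Cmod (Cminus a b) = Cmod (Cminus b a).
Proof. replace (Cminus a b) with (Copp (Cminus b a)) by ring. apply Cmod_opp. Qed.

Lemma Cmod_le_Rabs_fst_snd (z : C) : Cmod z <= Rabs (fst z) + Rabs (snd z).
Proof.
  destruct z as [a b]; unfold Cmod; simpl.
  pose proof (Rabs_pos a); pose proof (Rabs_pos b).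
  rewrite <- (sqrt_square (Rabs a + Rabs b)) by lra. apply sqrt_le_1_alt.
  assert (a * a = Rabs a * Rabs a) by (rewrite <- Rabs_mult, Rabs_right; nra).
  assert (b * b = Rabs b * Rabs b) by (rewrite <- Rabs_mult, Rabs_right; nra).
  nra.
Qed.

Lemma Rabs_Im_le_Cmod (c : C) : Rabs (Im c) <= Cmod c.
Proof. eapply Rle_trans; [|apply Rmax_Cmod]. apply Rmax_r. Qed.

Lemma continuous_C_eps (F : R -> C) x : continuous F x <->
  forall e, 0 < e -> exists d, 0 < d /\ forall y, Rabs (y - x) < d -> Cmod (Cminus (F y) (F x)) < e.
Proof.
  unfold continuous. rewrite (filterlim_locally_ball_norm (K:=R_AbsRing) (U:=C_R_NormedModule)).
  split.
  - intros H e He. destruct (H (mkposreal _ He)) as [d Hd].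
    exists d; split; [apply cond_pos|]. intros y Hy.
    specialize (Hd y Hy). unfold ball_norm in Hd. rewrite norm_C in Hd. exact Hd.
  - intros H eps. destruct (H eps (cond_pos eps)) as [d [Hd Hd']]. exists (mkposreal _ Hd).
    intros y Hy. unfold ball_norm. rewrite norm_C. exact (Hd' y Hy).
Qed.

Lemma continuous_C_plus (f g : R -> C) x :
  continuous f x -> continuous g x -> continuous (fun y => Cplus (f y) (g y)) x.
Proof. intros. apply (continuous_plus (V:=C_R_NormedModule) f g x); auto. Qed.

Lemma continuous_C_scal (phi : R -> R) (g : R -> C) x : continuous phi x -> continuous g x ->
  continuous (fun y => Cmult (RtoC (phi y)) (g y)) x.
Proof.
  intros H1 H2. apply (continuous_ext (fun y => @scal R_AbsRing C_R_NormedModule (phi y) (g y))).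
  { intros; apply scal_C. }
  apply (continuous_scal (V:=C_R_NormedModule) phi g); auto.
Qed.

Ltac continuity_R :=
  apply (ex_derive_continuous (K:=R_AbsRing) (V:=R_NormedModule)); auto_derive; auto.

Lemma is_deriv_on_eps S f x l : is_deriv_on S f x l <->
  forall eps, 0 < eps -> exists d, 0 < d /\ forall h, h <> 0 -> Rabs h < d -> S (x + h) ->
    Cmod (Cminus (Cmult (RtoC (/ h)) (Cminus (f (x + h)) (f x))) l) < eps.
Proof.
  unfold is_deriv_on. rewrite (filterlim_locally_ball_norm (K:=R_AbsRing) (U:=C_R_NormedModule)).
  split.
  - intros H eps Heps. destruct (H (mkposreal _ Heps)) as [d Hd].
    exists d; split; [apply cond_pos|]. intros h H0 Hh HS.
    specialize (Hd h). unfold ball_norm in Hd. rewrite norm_C in Hd.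
    apply Hd; [apply ball_Rabs; rewrite Rminus_0_r; exact Hh | split; auto].
  - intros H eps. destruct (H eps (cond_pos eps)) as [d [Hd Hd']].
    exists (mkposreal _ Hd). intros h Hb [H0 HS]. unfold ball_norm. rewrite norm_C.
    apply Hd'; auto. change (Rabs (h - 0) < d) in Hb. rewrite Rminus_0_r in Hb. exact Hb.
Qed.

Lemma is_deriv_on_unique S f x l1 l2 : is_deriv_on S f x l1 -> is_deriv_on S f x l2 ->
  (forall d, 0 < d -> exists h, h <> 0 /\ Rabs h < d /\ S (x + h)) -> l1 = l2.
Proof.
  intros H1 H2 HS. rewrite is_deriv_on_eps in H1, H2.
  assert (E : Cminus l1 l2 = RtoC 0).
  { apply Cmod_lt_all_eq0. intros eps He.
    destruct (H1 (eps/2)) as [d1 [Hd1 H1']]; [lra|].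
    destruct (H2 (eps/2)) as [d2 [Hd2 H2']]; [lra|].
    destruct (HS (Rmin d1 d2)) as [h [Hh0 [Hh HSh]]]; [apply Rmin_pos; auto|].
    assert (Rabs h < d1) by (eapply Rlt_le_trans; [exact Hh| apply Rmin_l]).
    assert (Rabs h < d2) by (eapply Rlt_le_trans; [exact Hh| apply Rmin_r]).
    specialize (H1' h Hh0 H HSh). specialize (H2' h Hh0 H0 HSh).
    eapply Rle_lt_trans;
      [apply (Cmod_minus_triangle _ (Cmult (RtoC (/ h)) (Cminus (f (x + h)) (f x))))|].
    rewrite Cmod_minus_sym. lra. }
  replace l1 with (Cplus (Cminus l1 l2) l2) by ring. rewrite E. ring.
Qed.

Lemma Icc_points_near p q y : p < q -> Icc p q y ->
  forall d, 0 < d -> exists h, h <> 0 /\ Rabs h < d /\ Icc p q (y + h).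
Proof.
  intros Hpq Hy d Hd. unfold Icc in *. set (m := Rmin d (q - p) / 2).
  assert (0 < m /\ m < d /\ m <= (q - p) / 2).
  { unfold m. pose proof (Rmin_l d (q - p)). pose proof (Rmin_r d (q - p)).
    assert (0 < Rmin d (q - p)) by (apply Rmin_pos; lra). lra. }
  destruct (Rle_dec y ((p + q) / 2)).
  - exists m. split; [lra|split; [rewrite Rabs_right; lra|lra]].
  - exists (- m). split; [lra|split; [rewrite Rabs_Ropp, Rabs_right; lra|lra]].
Qed.

Lemma Ioc_points_near p q t : p < t <= q ->
  forall d, 0 < d -> exists h, h <> 0 /\ Rabs h < d /\ Ioc p q (t + h).
Proof.
  intros Ht d Hd. set (m := Rmin d (t - p) / 2).
  assert (0 < m /\ m < d /\ m < t - p).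
  { unfold m. pose proof (Rmin_l d (t - p)). pose proof (Rmin_r d (t - p)).
    assert (0 < Rmin d (t - p)) by (apply Rmin_pos; lra). lra. }
  exists (- m). unfold Ioc. split; [lra|split; [rewrite Rabs_Ropp, Rabs_right; lra|lra]].
Qed.

Lemma is_deriv_on_ext S f g x l : (forall y, S y -> f y = g y) -> S x ->
  is_deriv_on S f x l -> is_deriv_on S g x l.
Proof.
  intros E Sx H. rewrite is_deriv_on_eps in *. intros eps He.
  destruct (H eps He) as [d [Hd H']].
  exists d; split; auto. intros h H0 Hh Sh. rewrite <- !E; auto.
Qed.

Lemma is_deriv_on_subset (S S' : R -> Prop) f x l : (forall y, S' y -> S y) ->
  is_deriv_on S f x l -> is_deriv_on S' f x l.
Proof.
  intros E H. rewrite is_deriv_on_eps in *. intros eps He.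
  destruct (H eps He) as [d [Hd H']]. exists d; split; auto.
Qed.

Lemma is_deriv_on_scal S f x l c : is_deriv_on S f x l ->
  is_deriv_on S (fun z => Cmult (RtoC c) (f z)) x (Cmult (RtoC c) l).
Proof.
  intros H. rewrite is_deriv_on_eps in *. intros e He.
  destruct (H (e / (Rabs c + 1))) as [d [Hd Hd']].
  { apply Rdiv_lt_0_compat; auto. pose proof (Rabs_pos c); lra. }
  exists d; split; auto. intros h H0 Hh Sh. specialize (Hd' h H0 Hh Sh).
  replace (Cminus (Cmult (RtoC (/ h)) (Cminus (Cmult (RtoC c) (f (x + h))) (Cmult (RtoC c) (f x))))
             (Cmult (RtoC c) l))
    with (Cmult (RtoC c) (Cminus (Cmult (RtoC (/ h)) (Cminus (f (x + h)) (f x))) l)) by ring.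
  rewrite Cmod_mult, Cmod_R. pose proof (Rabs_pos c).
  apply Rle_lt_trans with (Rabs c * (e / (Rabs c + 1))).
  - apply Rmult_le_compat_l; lra.
  - apply Rlt_le_trans with ((Rabs c + 1) * (e / (Rabs c + 1))); [|right; field; lra].
    apply Rmult_lt_compat_r; [apply Rdiv_lt_0_compat; lra|lra].
Qed.

Definition clamp (a b x : R) := Rmax a (Rmin b x).

Lemma clamp_in a b x : a <= b -> a <= clamp a b x <= b.
Proof. intros; unfold clamp, Rmax, Rmin; repeat destruct Rle_dec; lra. Qed.

Lemma clamp_id a b x : a <= x <= b -> clamp a b x = x.
Proof. intros; unfold clamp, Rmax, Rmin; repeat destruct Rle_dec; lra. Qed.

Lemma clamp_Rabs_le a b x y : a <= b -> Rabs (clamp a b x - clamp a b y) <= Rabs (x - y).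
Proof.
  intros; unfold clamp, Rmax, Rmin; repeat destruct Rle_dec;
  unfold Rabs; repeat destruct Rcase_abs; lra.
Qed.

Definition cont_on (S : R -> Prop) (v : R -> C) : Prop :=
  forall s, S s -> forall e, 0 < e -> exists d, 0 < d /\ forall s', S s' ->
    Rabs (s' - s) < d -> Cmod (Cminus (v s') (v s)) < e.

Lemma continuous_clamp (v : R -> C) T : 0 <= T -> cont_on (Icc 0 T) v ->
  forall x, continuous (fun s => v (clamp 0 T s)) x.
Proof.
  intros HT H x. apply continuous_C_eps. intros e He.
  destruct (H (clamp 0 T x) (clamp_in 0 T x HT) e He) as [d [Hd Hd']].
  exists d; split; auto. intros y Hy. apply Hd'; [apply clamp_in; auto|].
  eapply Rle_lt_trans; [apply clamp_Rabs_le; auto|exact Hy].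
Qed.

Definition is_derivR_on (S : R -> Prop) (phi : R -> R) (x l : R) : Prop :=
  forall e, 0 < e -> exists d, 0 < d /\ forall h, h <> 0 -> Rabs h < d -> S (x + h) ->
    Rabs ((phi (x + h) - phi x) / h - l) < e.

(* [MVT_gen] needs a function on all of R; composing with [clamp a b] extends [phi] from
   [a, b] without changing it there. *)
Section ClampedDerivative.

Variables (phi : R -> R) (S : R -> Prop) (a b : R).
Hypothesis Hab : a < b.
Hypothesis HS : forall x, a <= x <= b -> S x.

Lemma derivable_pt_lim_clamp x l : a < x < b -> is_derivR_on S phi x l ->
  derivable_pt_lim (fun y => phi (clamp a b y)) x l.
Proof.
  intros Hx Hd e He. destruct (Hd e He) as [d [Hd0 Hd']].
  assert (Hp : 0 < Rmin d (Rmin (x - a) (b - x))) by (repeat apply Rmin_pos; lra).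
  exists (mkposreal _ Hp). intros h Hh0 Hh. simpl in Hh.
  pose proof (Rmin_l d (Rmin (x - a) (b - x))). pose proof (Rmin_r d (Rmin (x - a) (b - x))).
  pose proof (Rmin_l (x - a) (b - x)). pose proof (Rmin_r (x - a) (b - x)).
  assert (a <= x + h <= b) by (unfold Rabs in Hh; destruct Rcase_abs; lra).
  rewrite !clamp_id by lra. apply Hd'; auto; lra.
Qed.

Lemma continuity_pt_clamp x l : a <= x <= b -> is_derivR_on S phi x l ->
  continuity_pt (fun y => phi (clamp a b y)) x.
Proof.
  intros Hx Hd e He. destruct (Hd 1 Rlt_0_1) as [d [Hd0 Hd']].
  set (M := Rabs l + 1).
  assert (HM : 0 < M) by (unfold M; pose proof (Rabs_pos l); lra).
  exists (Rmin d (e / M)). split; [apply Rmin_pos; auto; apply Rdiv_lt_0_compat; auto|].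
  intros y [_ Hy]. unfold dist in Hy |- *; simpl in Hy |- *; unfold R_dist in Hy |- *.
  pose proof (Rmin_l d (e / M)). pose proof (Rmin_r d (e / M)).
  pose proof (clamp_Rabs_le a b y x ltac:(lra)) as L. rewrite (clamp_id a b x) in L |- * by lra.
  pose proof (clamp_in a b y ltac:(lra)) as Iy.
  set (z := clamp a b y) in *.
  destruct (Req_dec z x) as [Ez|Ez]; [rewrite Ez, Rminus_diag, Rabs_R0; auto|].
  assert (Hz : z - x <> 0) by lra.
  specialize (Hd' (z - x) Hz ltac:(lra)). replace (x + (z - x)) with z in Hd' by ring.
  specialize (Hd' (HS z Iy)).
  replace (phi z - phi x) with (((phi z - phi x) / (z - x) - l) * (z - x) + l * (z - x))
    by (field; auto).
  eapply Rle_lt_trans; [apply Rabs_triang|]. rewrite !Rabs_mult.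
  assert (0 < Rabs (z - x)) by (apply Rabs_pos_lt; auto).
  apply Rlt_le_trans with (M * Rabs (z - x)); [unfold M; nra|].
  apply Rle_trans with (M * (e / M)); [apply Rmult_le_compat_l; lra|]. right; field; lra.
Qed.

Lemma mean_value_ineq_R (dphi : R -> R) eps :
  (forall x, a <= x <= b -> is_derivR_on S phi x (dphi x)) ->
  (forall x, a <= x <= b -> Rabs (dphi x) <= eps) ->
  Rabs (phi b - phi a) <= eps * (b - a).
Proof.
  intros Hd Hb.
  destruct (MVT_gen (fun x => phi (clamp a b x)) a b dphi) as [c [Hc E]];
    rewrite ?Rmin_left, ?Rmax_right in * by lra.
  - intros x Hx. apply is_derive_Reals, derivable_pt_lim_clamp; auto; apply Hd; lra.
  - intros x Hx. apply (continuity_pt_clamp x (dphi x)); auto.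
  - rewrite !clamp_id in E by lra. rewrite E, Rabs_mult, (Rabs_right (b - a)) by lra.
    apply Rmult_le_compat_r; [lra|]. apply Hb; auto.
Qed.

End ClampedDerivative.

Section ComponentMeanValue.

Variable p : C -> R.
Hypothesis p_plus : forall z w, p (Cplus z w) = p z + p w.
Hypothesis p_scal : forall r z, p (Cmult (RtoC r) z) = r * p z.
Hypothesis p_le_Cmod : forall z, Rabs (p z) <= Cmod z.

Lemma component_minus z w : p (Cminus z w) = p z - p w.
Proof.
  unfold Cminus. rewrite p_plus.
  replace (Copp w) with (Cmult (RtoC (-1)) w) by ring. rewrite p_scal. ring.
Qed.

Lemma mean_value_ineq_component (f df : R -> C) (S : R -> Prop) a b (L : C) eps : a < b ->
  (forall x, a <= x <= b -> S x) ->
  (forall x, a <= x <= b -> is_deriv_on S f x (df x)) ->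
  (forall x, a <= x <= b -> Cmod (Cminus (df x) L) <= eps) ->
  Rabs (p (f b) - p L * b - (p (f a) - p L * a)) <= eps * (b - a).
Proof.
  intros Hab HS Hd Hb.
  apply (mean_value_ineq_R (fun x => p (f x) - p L * x) S a b Hab HS
           (fun x => p (df x) - p L)).
  - intros x Hx e He. destruct (proj1 (is_deriv_on_eps _ _ _ _) (Hd x Hx) e He) as [d [Hd0 Hd']].
    exists d; split; auto. intros h H0 Hh Sh. specialize (Hd' h H0 Hh Sh).
    eapply Rle_lt_trans; [|exact Hd']. eapply Rle_trans; [|apply p_le_Cmod].
    rewrite component_minus, p_scal, component_minus. right. f_equal. field. auto.
  - intros x Hx. rewrite <- component_minus. eapply Rle_trans; [apply p_le_Cmod|]. apply Hb; auto.
Qed.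

End ComponentMeanValue.

Lemma mean_value_ineq_C (f df : R -> C) (S : R -> Prop) a b (L : C) eps : a <= b ->
  (forall x, a <= x <= b -> S x) ->
  (forall x, a <= x <= b -> is_deriv_on S f x (df x)) ->
  (forall x, a <= x <= b -> Cmod (Cminus (df x) L) <= eps) ->
  Cmod (Cminus (Cminus (f b) (f a)) (Cmult (RtoC (b - a)) L)) <= 2 * eps * (b - a).
Proof.
  intros [Hab|Hab] HS Hd Hb.
  2:{ subst. rewrite Rminus_diag.
      replace (Cminus (Cminus (f b) (f b)) (Cmult (RtoC 0) L)) with (RtoC 0) by ring.
      rewrite Cmod_0. lra. }
  assert (Hre : forall r (z : C), fst (Cmult (RtoC r) z) = r * fst z)
    by (intros r [zx zy]; unfold Cmult, RtoC; simpl; ring).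
  assert (Him : forall r (z : C), snd (Cmult (RtoC r) z) = r * snd z)
    by (intros r [zx zy]; unfold Cmult, RtoC; simpl; ring).
  pose proof (mean_value_ineq_component (@fst R R) ltac:(reflexivity) Hre re_le_Cmod
                f df S a b L eps Hab HS Hd Hb) as Kre.
  pose proof (mean_value_ineq_component (@snd R R) ltac:(reflexivity) Him Rabs_Im_le_Cmod
                f df S a b L eps Hab HS Hd Hb) as Kim.
  eapply Rle_trans; [apply Cmod_le_Rabs_fst_snd|]. simpl.
  replace (fst (f b) + - fst (f a) + - ((b - a) * fst L - 0 * snd L)) with
    (fst (f b) - fst L * b - (fst (f a) - fst L * a)) by ring.
  replace (snd (f b) + - snd (f a) + - ((b - a) * snd L + 0 * fst L)) with
    (snd (f b) - snd L * b - (snd (f a) - snd L * a)) by ring.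
  lra.
Qed.

Lemma mean_value_ineq_C_between (f df : R -> C) (S : R -> Prop) y h L eps :
  (forall x, Rmin y (y + h) <= x <= Rmax y (y + h) -> S x) ->
  (forall x, Rmin y (y + h) <= x <= Rmax y (y + h) -> is_deriv_on S f x (df x)) ->
  (forall x, Rmin y (y + h) <= x <= Rmax y (y + h) -> Cmod (Cminus (df x) L) <= eps) ->
  Cmod (Cminus (Cminus (f (y + h)) (f y)) (Cmult (RtoC h) L)) <= 2 * eps * Rabs h.
Proof.
  intros HS Hd Hb. destruct (Rle_dec 0 h) as [Hh|Hh].
  - rewrite Rmin_left, Rmax_right in * by lra. rewrite Rabs_right by lra.
    pose proof (mean_value_ineq_C f df S y (y + h) L eps ltac:(lra) HS Hd Hb) as M.
    replace (y + h - y) with h in M by ring. exact M.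
  - rewrite Rmin_right, Rmax_left in * by lra. rewrite Rabs_left by lra.
    pose proof (mean_value_ineq_C f df S (y + h) y L eps ltac:(lra) HS Hd Hb) as M.
    replace (y - (y + h)) with (- h) in M by ring.
    replace (Cminus (Cminus (f (y + h)) (f y)) (Cmult (RtoC h) L)) with
      (Copp (Cminus (Cminus (f y) (f (y + h))) (Cmult (RtoC (- h)) L)))
      by (apply injective_projections; simpl; ring).
    rewrite Cmod_opp. exact M.
Qed.

(* Joint continuity at every (y0, t0) with t0 in [a, b] gives, by compactness of [a, b], a
   modulus in z that is uniform in t. *)
Lemma joint_cont_unif_in_param (F : R -> R -> C) (S : R -> Prop) y0 a b : S y0 ->
  (forall t0, a <= t0 <= b -> forall e, 0 < e -> exists d, 0 < d /\
     forall z t, S z -> a <= t <= b -> Rabs (z - y0) < d -> Rabs (t - t0) < d ->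
       Cmod (Cminus (F z t) (F y0 t0)) < e) ->
  forall e, 0 < e -> exists d, 0 < d /\
    forall z t, S z -> a <= t <= b -> Rabs (z - y0) < d -> Cmod (Cminus (F z t) (F y0 t)) < e.
Proof.
  intros Sy0 H e He.
  assert (X : forall t0, exists d : posreal, a <= t0 <= b ->
            forall z t, S z -> a <= t <= b -> Rabs (z - y0) < d -> Rabs (t - t0) < d ->
              Cmod (Cminus (F z t) (F y0 t0)) < e / 2).
  { intros t0. destruct (Rle_dec a t0) as [h1|h1]; [destruct (Rle_dec t0 b) as [h2|h2]|].
    - destruct (H t0 (conj h1 h2) (e / 2)) as [d [Hd Hd']]; [lra|].
      exists (mkposreal _ Hd). intros _. exact Hd'.
    - exists (mkposreal 1 Rlt_0_1). intros; lra.
    - exists (mkposreal 1 Rlt_0_1). intros; lra. }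
  set (delta := fun t0 => proj1_sig (constructive_indefinite_description _ (X t0))).
  assert (Hdel : forall t0, a <= t0 <= b ->
            forall z t, S z -> a <= t <= b ->
              Rabs (z - y0) < delta t0 -> Rabs (t - t0) < delta t0 ->
              Cmod (Cminus (F z t) (F y0 t0)) < e / 2).
  { intros t0. unfold delta. destruct (constructive_indefinite_description _ (X t0)) as [d Hd].
    exact Hd. }
  destruct (compactness_value_1d a b delta) as [d Hd].
  exists d; split; [apply cond_pos|]. intros z t Sz Ht Hz.
  destruct (Rlt_dec (Cmod (Cminus (F z t) (F y0 t))) e) as [ok|nok]; [exact ok|exfalso].
  apply (Hd t Ht). intros [t0 [Ht0 [H1 H2]]]. apply nok.
  eapply Rle_lt_trans; [apply (Cmod_minus_triangle _ (F y0 t0))|].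
  assert (Cmod (Cminus (F z t) (F y0 t0)) < e / 2) by (apply Hdel; auto; lra).
  assert (Cmod (Cminus (F y0 t) (F y0 t0)) < e / 2).
  { apply Hdel; auto. rewrite Rminus_diag, Rabs_R0. apply cond_pos. }
  rewrite (Cmod_minus_sym (F y0 t0)). lra.
Qed.

Lemma cont_on_Icc_unif T (v : R -> C) : 0 <= T -> cont_on (Icc 0 T) v ->
  forall e, 0 < e -> exists d, 0 < d /\ forall s s', 0 <= s <= T -> 0 <= s' <= T ->
    Rabs (s' - s) < d -> Cmod (Cminus (v s') (v s)) < e.
Proof.
  intros HT H e He.
  destruct (joint_cont_unif_in_param (fun z tau => v (clamp 0 T (tau + z))) (fun _ => True) 0 0 T I)
    with (e := e) as [d [Hd Hd']]; auto.
  - intros t0 Ht0 e' He'. destruct (H t0 Ht0 e' He') as [d [Hd Hd']].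
    exists (d / 2); split; [lra|]. intros z tau _ Htau Hz Htt.
    rewrite Rplus_0_r, (clamp_id 0 T t0) by lra.
    apply Hd'; [apply clamp_in; auto|].
    replace (clamp 0 T (tau + z) - t0) with (clamp 0 T (tau + z) - clamp 0 T t0)
      by (rewrite (clamp_id 0 T t0); lra).
    eapply Rle_lt_trans; [apply clamp_Rabs_le; auto|]. rewrite Rminus_0_r in Hz.
    replace (tau + z - t0) with ((tau - t0) + z) by ring.
    eapply Rle_lt_trans; [apply Rabs_triang|]. lra.
  - exists d; split; auto. intros s s' Hs Hs' Hss.
    specialize (Hd' (s' - s) s I Hs ltac:(rewrite Rminus_0_r; auto)).
    rewrite Rplus_0_r in Hd'. replace (s + (s' - s)) with s' in Hd' by ring.
    rewrite !clamp_id in Hd' by lra. exact Hd'.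
Qed.

Definition joint_cont_on (S : R -> Prop) T (G : R -> R -> C) : Prop :=
  forall z tau, S z -> 0 <= tau <= T -> forall e, 0 < e -> exists d, 0 < d /\
    forall z' tau', S z' -> 0 <= tau' <= T -> Rabs (z' - z) < d -> Rabs (tau' - tau) < d ->
      Cmod (Cminus (G z' tau') (G z tau)) < e.

Lemma joint_cont_on_slice S T G z : joint_cont_on S T G -> S z -> cont_on (Icc 0 T) (G z).
Proof.
  intros H Sz s Hs e He. destruct (H z s Sz Hs e He) as [d [Hd Hd']]. exists d; split; auto.
  intros s' Hs' Hss. apply Hd'; auto. rewrite Rminus_diag, Rabs_R0; auto.
Qed.

Definition CInt (f : R -> C) (a b : R) : C := @RInt C_R_CompleteNormedModule f a b.
Definition ex_CInt (f : R -> C) (a b : R) : Prop := @ex_RInt C_R_NormedModule f a b.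

Lemma ex_CInt_minus f g a b : ex_CInt f a b -> ex_CInt g a b ->
  ex_CInt (fun r => Cminus (f r) (g r)) a b.
Proof. intros. apply (ex_RInt_minus (V:=C_R_NormedModule) f g); auto. Qed.

Lemma ex_CInt_plus f g a b : ex_CInt f a b -> ex_CInt g a b ->
  ex_CInt (fun r => Cplus (f r) (g r)) a b.
Proof. intros. apply (ex_RInt_plus (V:=C_R_NormedModule) f g); auto. Qed.

Lemma ex_CInt_scal f c a b : ex_CInt f a b -> ex_CInt (fun r => Cmult (RtoC c) (f r)) a b.
Proof.
  intros. eapply ex_RInt_ext; [|apply (ex_RInt_scal (V:=C_R_NormedModule) f a b c H)].
  intros; simpl; rewrite scal_C; auto.
Qed.

Lemma CInt_minus f g a b : ex_CInt f a b -> ex_CInt g a b ->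
  CInt (fun r => Cminus (f r) (g r)) a b = Cminus (CInt f a b) (CInt g a b).
Proof. intros. unfold CInt. apply (RInt_minus (V:=C_R_CompleteNormedModule) f g); auto. Qed.

Lemma CInt_plus f g a b : ex_CInt f a b -> ex_CInt g a b ->
  CInt (fun r => Cplus (f r) (g r)) a b = Cplus (CInt f a b) (CInt g a b).
Proof. intros. unfold CInt. apply (RInt_plus (V:=C_R_CompleteNormedModule) f g); auto. Qed.

Lemma CInt_scal f c a b : ex_CInt f a b ->
  CInt (fun r => Cmult (RtoC c) (f r)) a b = Cmult (RtoC c) (CInt f a b).
Proof.
  intros. unfold CInt.
  etransitivity; [|exact (scal_C c (@RInt C_R_CompleteNormedModule f a b))].
  etransitivity; [|exact (RInt_scal (V:=C_R_CompleteNormedModule) f a b c H)].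
  apply (@RInt_ext C_R_CompleteNormedModule). intros; rewrite scal_C; auto.
Qed.

Lemma CInt_ext f g a b : (forall x, Rmin a b < x < Rmax a b -> f x = g x) ->
  CInt f a b = CInt g a b.
Proof. intros. unfold CInt. apply (@RInt_ext C_R_CompleteNormedModule); auto. Qed.

Lemma is_RInt_Ci f a b L : @is_RInt C_R_NormedModule f a b L ->
  @is_RInt C_R_NormedModule (fun r => Cmult Ci (f r)) a b (Cmult Ci L).
Proof.
  intros HL.
  pose proof (is_RInt_fct_extend_fst (U:=R_NormedModule) (V:=R_NormedModule) f a b L HL) as H1.
  pose proof (is_RInt_fct_extend_snd (U:=R_NormedModule) (V:=R_NormedModule) f a b L HL) as H2.
  pose proof (is_RInt_opp (V:=R_NormedModule) _ _ _ _ H2) as H3.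
  pose proof (is_RInt_fct_extend_pair (U:=R_NormedModule) (V:=R_NormedModule)
    (fun r => (opp (snd (f r)), fst (f r))) a b _ _ H3 H1) as H4.
  replace (Cmult Ci L) with ((opp (snd L), fst L) : C)
    by (apply injective_projections; simpl; unfold opp; simpl; ring).
  eapply is_RInt_ext; [|exact H4]. intros x _.
  apply injective_projections; simpl; unfold opp; simpl; ring.
Qed.

Lemma CInt_Ci f a b : ex_CInt f a b -> CInt (fun r => Cmult Ci (f r)) a b = Cmult Ci (CInt f a b).
Proof.
  intros H. unfold CInt. apply (is_RInt_unique (V:=C_R_CompleteNormedModule)).
  apply is_RInt_Ci, (RInt_correct (V:=C_R_CompleteNormedModule)), H.
Qed.

Lemma ex_CInt_Ci f a b : ex_CInt f a b -> ex_CInt (fun r => Cmult Ci (f r)) a b.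
Proof.
  intros H. eexists. apply is_RInt_Ci, (RInt_correct (V:=C_R_CompleteNormedModule)), H.
Qed.

Lemma Cmod_CInt_le f a b M : a <= b -> ex_CInt f a b ->
  (forall x, a <= x <= b -> Cmod (f x) <= M) -> Cmod (CInt f a b) <= M * (b - a).
Proof.
  intros Hab Hf HM. rewrite <- norm_C.
  eapply (norm_RInt_le (V:=C_R_NormedModule) f (fun _ => M) a b); auto.
  - intros; rewrite norm_C; auto.
  - apply (RInt_correct (V:=C_R_CompleteNormedModule)). exact Hf.
  - replace (M * (b - a)) with (scal (b - a) M) by (unfold scal; simpl; unfold mult; simpl; ring).
    apply (is_RInt_const (V:=R_NormedModule)).
Qed.

Lemma is_deriv_on_CInt_param (F F' : R -> R -> C) (S : R -> Prop) y :
  (forall z, S z -> ex_CInt (F z) 0 1) -> ex_CInt (F' y) 0 1 -> S y ->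
  (forall e, 0 < e -> exists d, 0 < d /\ forall h, h <> 0 -> Rabs h < d -> S (y + h) ->
     forall r, 0 <= r <= 1 ->
     Cmod (Cminus (Cminus (F (y+h) r) (F y r)) (Cmult (RtoC h) (F' y r))) <= e * Rabs h) ->
  is_deriv_on S (fun z => CInt (F z) 0 1) y (CInt (F' y) 0 1).
Proof.
  intros HF HF' Sy UD. apply is_deriv_on_eps. intros e He.
  destruct (UD (e/2)) as [d [Hd Hd']]; [lra|]. exists d; split; auto.
  intros h H0 Hh Sh.
  rewrite <- (CInt_minus (F (y+h)) (F y)) by auto.
  rewrite <- (CInt_scal _ (/h)) by (apply ex_CInt_minus; auto).
  rewrite <- (CInt_minus (fun r => Cmult (RtoC (/ h)) (Cminus (F (y + h) r) (F y r))) (F' y))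
     by (first [exact HF' | apply ex_CInt_scal, ex_CInt_minus; apply HF; assumption]).
  eapply Rle_lt_trans; [apply (Cmod_CInt_le _ 0 1 (e/2)); [lra| |]|lra].
  - apply ex_CInt_minus; [|exact HF']. apply ex_CInt_scal, ex_CInt_minus; apply HF; assumption.
  - intros r Hr. specialize (Hd' h H0 Hh Sh r Hr).
    replace (Cminus (Cmult (RtoC (/ h)) (Cminus (F (y + h) r) (F y r))) (F' y r)) with
      (Cmult (RtoC (/ h)) (Cminus (Cminus (F (y+h) r) (F y r)) (Cmult (RtoC h) (F' y r)))).
    + rewrite Cmod_mult, Cmod_R. rewrite Rabs_inv.
      apply Rle_trans with (/ Rabs h * (e / 2 * Rabs h)).
      * apply Rmult_le_compat_l; auto. left; apply Rinv_0_lt_compat, Rabs_pos_lt; auto.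
      * right; field. apply Rabs_no_R0; auto.
    + apply injective_projections; simpl; field; auto.
Qed.

Lemma ex_CInt_continuous (F : R -> C) a b : (forall x, continuous F x) -> ex_CInt F a b.
Proof. intros H. apply (ex_RInt_continuous (V:=C_R_CompleteNormedModule)). intros; apply H. Qed.

Lemma CInt_continuous_lower (F : R -> C) b : (forall x, continuous F x) ->
  forall e, 0 < e -> exists d, 0 < d /\ forall z, Rabs z < d ->
     Cmod (Cminus (CInt F z b) (CInt F 0 b)) < e.
Proof.
  intros HF.
  assert (continuous (fun z => CInt F z b) 0).
  { apply (continuous_RInt_2 (V:=C_R_NormedModule) F 0 b). exists (mkposreal 1 Rlt_0_1).
    intros z _. apply (RInt_correct (V:=C_R_CompleteNormedModule)), ex_CInt_continuous; auto. }
  intros e He. destruct (proj1 (continuous_C_eps _ _) H e He) as [d [Hd Hd']].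
  exists d; split; auto.
  intros z Hz. apply Hd'. rewrite Rminus_0_r; auto.
Qed.

Definition small_o (S : R -> Prop) (x : R) (g : R -> C) : Prop :=
  forall e, 0 < e -> exists d, 0 < d /\ forall h, Rabs h < d -> S (x + h) ->
    Cmod (g h) <= e * Rabs h.

Definition lin_approx (S : R -> Prop) (f : R -> C) (x : R) (l : C) : Prop :=
  small_o S x (fun h => Cminus (Cminus (f (x + h)) (f x)) (Cmult (RtoC h) l)).

Definition lin_approxR (f : R -> R) (x l : R) : Prop :=
  forall e, 0 < e -> exists d, 0 < d /\ forall h, Rabs h < d ->
    Rabs (f (x + h) - f x - h * l) <= e * Rabs h.

Lemma small_o_ext S x g g' : (forall h, S (x + h) -> g h = g' h) -> small_o S x g -> small_o S x g'.
Proof.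
  intros E H e He. destruct (H e He) as [d [Hd H']]. exists d; split; auto.
  intros h Hh Sh. rewrite <- E; auto.
Qed.

Lemma small_o_plus S x g1 g2 :
  small_o S x g1 -> small_o S x g2 -> small_o S x (fun h => Cplus (g1 h) (g2 h)).
Proof.
  intros H1 H2 e He.
  destruct (H1 (e / 2)) as [d1 [Hd1 H1']]; [lra|]. destruct (H2 (e / 2)) as [d2 [Hd2 H2']]; [lra|].
  exists (Rmin d1 d2); split; [apply Rmin_pos; auto|]. intros h Hh Sh.
  pose proof (Rmin_l d1 d2). pose proof (Rmin_r d1 d2).
  specialize (H1' h ltac:(lra) Sh). specialize (H2' h ltac:(lra) Sh).
  eapply Rle_trans; [apply Cmod_triangle|]. lra.
Qed.

Lemma small_o_mul_bounded S x (k g : R -> C) M :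
  (exists d, 0 < d /\ forall h, Rabs h < d -> S (x + h) -> Cmod (k h) <= M) ->
  small_o S x g -> small_o S x (fun h => Cmult (k h) (g h)).
Proof.
  intros [d0 [Hd0 Hk]] Hg e He.
  assert (HM : 0 < Rabs M + 1) by (pose proof (Rabs_pos M); lra).
  destruct (Hg (e / (Rabs M + 1))) as [d [Hd Hg']]; [apply Rdiv_lt_0_compat; lra|].
  exists (Rmin d0 d); split; [apply Rmin_pos; auto|]. intros h Hh Sh.
  pose proof (Rmin_l d0 d). pose proof (Rmin_r d0 d).
  specialize (Hk h ltac:(lra) Sh). specialize (Hg' h ltac:(lra) Sh).
  pose proof (Cmod_ge_0 (k h)). pose proof (Cmod_ge_0 (g h)). pose proof (Rabs_pos h).
  pose proof (Rle_abs M).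
  rewrite Cmod_mult. apply Rle_trans with ((Rabs M + 1) * (e / (Rabs M + 1) * Rabs h)).
  - apply Rmult_le_compat; lra.
  - right. field. lra.
Qed.

Lemma small_o_quadratic S x (g : R -> C) K :
  (exists d, 0 < d /\ forall h, Rabs h < d -> S (x + h) -> Cmod (g h) <= K * (Rabs h * Rabs h)) ->
  small_o S x g.
Proof.
  intros [d0 [Hd0 Hg]] e He.
  assert (HK : 0 < Rabs K + 1) by (pose proof (Rabs_pos K); lra).
  exists (Rmin d0 (e / (Rabs K + 1))); split; [apply Rmin_pos; auto; apply Rdiv_lt_0_compat; lra|].
  intros h Hh Sh.
  pose proof (Rmin_l d0 (e / (Rabs K + 1))). pose proof (Rmin_r d0 (e / (Rabs K + 1))).
  specialize (Hg h ltac:(lra) Sh). pose proof (Rabs_pos h). pose proof (Rle_abs K).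
  eapply Rle_trans; [exact Hg|].
  apply Rle_trans with ((Rabs K + 1) * (e / (Rabs K + 1)) * Rabs h); [|right; field; lra].
  rewrite <- Rmult_assoc. apply Rmult_le_compat_r; [lra|].
  apply Rle_trans with ((Rabs K + 1) * Rabs h); [nra|]. apply Rmult_le_compat_l; lra.
Qed.

Lemma small_o_comp S1 S2 x y (g : R -> C) (k : R -> R) K :
  small_o S2 y g -> (forall h, S1 (x + h) -> S2 (y + k h)) ->
  (exists d, 0 < d /\ forall h, Rabs h < d -> Rabs (k h) <= K * Rabs h) ->
  small_o S1 x (fun h => g (k h)).
Proof.
  intros Hg HS [d0 [Hd0 Hk]] e He.
  assert (HK : 0 < Rabs K + 1) by (pose proof (Rabs_pos K); lra).
  destruct (Hg (e / (Rabs K + 1))) as [d [Hd Hg']]; [apply Rdiv_lt_0_compat; lra|].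
  exists (Rmin d0 (d / (Rabs K + 1))); split; [apply Rmin_pos; auto; apply Rdiv_lt_0_compat; lra|].
  intros h Hh Sh.
  pose proof (Rmin_l d0 (d / (Rabs K + 1))). pose proof (Rmin_r d0 (d / (Rabs K + 1))).
  specialize (Hk h ltac:(lra)). pose proof (Rabs_pos h). pose proof (Rle_abs K).
  assert (Hkh : Rabs (k h) <= (Rabs K + 1) * Rabs h) by nra.
  assert (Rabs (k h) < d).
  { eapply Rle_lt_trans; [exact Hkh|].
    apply Rlt_le_trans with ((Rabs K + 1) * (d / (Rabs K + 1))); [apply Rmult_lt_compat_l; lra|].
    right; field; lra. }
  eapply Rle_trans; [apply Hg'; auto|].
  apply Rle_trans with (e / (Rabs K + 1) * ((Rabs K + 1) * Rabs h)); [|right; field; lra].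
  apply Rmult_le_compat_l; [apply Rlt_le, Rdiv_lt_0_compat; lra|exact Hkh].
Qed.

Lemma small_o_of_lin_approxR S phi x l :
  lin_approxR phi x l -> small_o S x (fun h => RtoC (phi (x + h) - phi x - h * l)).
Proof.
  intros H e He. destruct (H e He) as [d [Hd H']]. exists d; split; auto.
  intros h Hh _. rewrite Cmod_R. auto.
Qed.

Lemma lin_approxR_Rabs_le phi x l : lin_approxR phi x l ->
  exists d, 0 < d /\ forall h, Rabs h < d -> Rabs (phi (x + h) - phi x) <= (Rabs l + 1) * Rabs h.
Proof.
  intros H. destruct (H 1 Rlt_0_1) as [d [Hd H']]. exists d; split; auto. intros h Hh.
  specialize (H' h Hh).
  replace (phi (x + h) - phi x) with ((phi (x + h) - phi x - h * l) + h * l) by ring.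
  eapply Rle_trans; [apply Rabs_triang|]. rewrite Rabs_mult. lra.
Qed.

Lemma lin_approx_Cmod_le S f x l : lin_approx S f x l ->
  exists d, 0 < d /\ forall h, Rabs h < d -> S (x + h) ->
    Cmod (Cminus (f (x + h)) (f x)) <= (Cmod l + 1) * Rabs h.
Proof.
  intros H. destruct (H 1 Rlt_0_1) as [d [Hd H']]. exists d; split; auto. intros h Hh Sh.
  specialize (H' h Hh Sh).
  replace (Cminus (f (x + h)) (f x))
    with (Cplus (Cminus (Cminus (f (x + h)) (f x)) (Cmult (RtoC h) l)) (Cmult (RtoC h) l)) by ring.
  eapply Rle_trans; [apply Cmod_triangle|]. rewrite Cmod_mult, Cmod_R. lra.
Qed.

Lemma is_deriv_on_lin_approx S f x l : is_deriv_on S f x l <-> lin_approx S f x l.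
Proof.
  rewrite is_deriv_on_eps. split.
  - intros H e He. destruct (H e He) as [d [Hd H']]. exists d; split; auto.
    intros h Hh Sh. destruct (Req_dec h 0) as [E|E].
    + subst. rewrite Rplus_0_r, Rabs_R0.
      replace (Cminus (Cminus (f x) (f x)) (Cmult (RtoC 0) l)) with (RtoC 0) by ring.
      rewrite Cmod_0. lra.
    + specialize (H' h E Hh Sh).
      replace (Cminus (Cminus (f (x + h)) (f x)) (Cmult (RtoC h) l)) with
        (Cmult (RtoC h) (Cminus (Cmult (RtoC (/ h)) (Cminus (f (x + h)) (f x))) l))
        by (apply injective_projections; simpl; field; auto).
      rewrite Cmod_mult, Cmod_R, Rmult_comm. apply Rmult_le_compat_r; [apply Rabs_pos|lra].
  - intros H e He. destruct (H (e / 2)) as [d [Hd H']]; [lra|]. exists d; split; auto.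
    intros h E Hh Sh. specialize (H' h Hh Sh).
    assert (0 < Rabs h) by (apply Rabs_pos_lt; auto).
    replace (Cminus (Cmult (RtoC (/ h)) (Cminus (f (x + h)) (f x))) l) with
      (Cmult (RtoC (/ h)) (Cminus (Cminus (f (x + h)) (f x)) (Cmult (RtoC h) l)))
      by (apply injective_projections; simpl; field; auto).
    rewrite Cmod_mult, Cmod_R, Rabs_inv.
    apply Rle_lt_trans with (/ Rabs h * (e / 2 * Rabs h)).
    + apply Rmult_le_compat_l; auto. left; apply Rinv_0_lt_compat; auto.
    + replace (/ Rabs h * (e / 2 * Rabs h)) with (e / 2) by (field; lra). lra.
Qed.

Lemma lin_approx_of_is_derive S f x l :
  @is_derive R_AbsRing C_R_NormedModule f x l -> lin_approx S f x l.
Proof.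
  intros [_ H]. specialize (H x (fun P HP => HP)).
  intros e He. destruct (H (mkposreal _ He)) as [d Hd]. exists d; split; [apply cond_pos|].
  intros h Hh _. specialize (Hd (x + h)). simpl in Hd.
  assert (Hb : ball x d (x + h)) by (apply ball_Rabs; replace (x + h - x) with h by ring; auto).
  specialize (Hd Hb). rewrite norm_C in Hd.
  replace (Cminus (Cminus (f (x + h)) (f x)) (Cmult (RtoC h) l)) with
    (@minus C_R_NormedModule (@minus C_R_NormedModule (f (x + h)) (f x))
       (@scal R_AbsRing C_R_NormedModule (@minus R_NormedModule (x + h) x) l)).
  - eapply Rle_trans; [exact Hd|]. right. f_equal. unfold norm; simpl. unfold abs; simpl. f_equal.
    unfold minus, plus, opp; simpl. ring.
  - rewrite scal_C, !minus_C. do 3 f_equal. unfold minus, plus, opp; simpl. ring.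
Qed.

Lemma lin_approxR_of_is_derive (f : R -> R) x l : is_derive f x l -> lin_approxR f x l.
Proof.
  intros H. apply is_derive_Reals in H. intros e He.
  destruct (H e He) as [d Hd]. exists d; split; [apply cond_pos|].
  intros h Hh. destruct (Req_dec h 0) as [E|E].
  - subst. rewrite Rplus_0_r, Rabs_R0. replace (f x - f x - 0 * l) with 0 by ring.
    rewrite Rabs_R0; lra.
  - specialize (Hd h E Hh).
    replace (f (x + h) - f x - h * l) with (h * ((f (x + h) - f x) / h - l)) by (field; auto).
    rewrite Rabs_mult, Rmult_comm. apply Rmult_le_compat_r; [apply Rabs_pos|lra].
Qed.

Lemma lin_approx_minus S f g x l1 l2 : lin_approx S f x l1 -> lin_approx S g x l2 ->
  lin_approx S (fun s => Cminus (f s) (g s)) x (Cminus l1 l2).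
Proof.
  intros H1 H2.
  apply (small_o_ext S x (fun h =>
    Cplus (Cminus (Cminus (f (x + h)) (f x)) (Cmult (RtoC h) l1))
          (Cmult (RtoC (-1)) (Cminus (Cminus (g (x + h)) (g x)) (Cmult (RtoC h) l2)))));
    [intros h _; apply injective_projections; simpl; ring|].
  apply small_o_plus; [exact H1|].
  apply (small_o_mul_bounded S x (fun _ => RtoC (-1)) _ 1); [|exact H2].
  exists 1; split; [lra|]. intros. rewrite Cmod_R, Rabs_left by lra. lra.
Qed.

Lemma lin_approx_ext S f g x l : (forall y, S y -> f y = g y) -> S x ->
  lin_approx S f x l -> lin_approx S g x l.
Proof. intros E Sx. rewrite <- !is_deriv_on_lin_approx. apply is_deriv_on_ext; auto. Qed.

(* (phi A)(x+h) - (phi A)(x) - h (phi' A + phi A')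
     = R_phi(h) A(x+h) + h phi' (A(x+h) - A(x)) + phi(x) R_A(h). *)
Lemma lin_approx_scal_fun S (phi : R -> R) (A : R -> C) x dphi dA :
  lin_approxR phi x dphi -> lin_approx S A x dA ->
  lin_approx S (fun s => Cmult (RtoC (phi s)) (A s)) x
    (Cplus (Cmult (RtoC dphi) (A x)) (Cmult (RtoC (phi x)) dA)).
Proof.
  intros Hp HA.
  destruct (lin_approx_Cmod_le _ _ _ _ HA) as [d [Hd HAb]].
  apply (small_o_ext S x (fun h =>
    Cplus (Cplus (Cmult (A (x + h)) (RtoC (phi (x + h) - phi x - h * dphi)))
                 (Cmult (RtoC (h * dphi)) (Cminus (A (x + h)) (A x))))
          (Cmult (RtoC (phi x)) (Cminus (Cminus (A (x + h)) (A x)) (Cmult (RtoC h) dA)))));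
    [intros h _; apply injective_projections; simpl; ring|].
  apply small_o_plus; [apply small_o_plus|].
  - apply (small_o_mul_bounded _ _ _ _ ((Cmod dA + 1) * d + Cmod (A x)));
      [|apply small_o_of_lin_approxR, Hp].
    exists d; split; auto. intros h Hh Sh. specialize (HAb h Hh Sh).
    replace (A (x + h)) with (Cplus (Cminus (A (x + h)) (A x)) (A x)) by ring.
    eapply Rle_trans; [apply Cmod_triangle|]. pose proof (Cmod_ge_0 dA). nra.
  - apply (small_o_quadratic _ _ _ (Rabs dphi * (Cmod dA + 1))).
    exists d; split; auto. intros h Hh Sh. specialize (HAb h Hh Sh).
    rewrite Cmod_mult, Cmod_R, Rabs_mult. pose proof (Rabs_pos h). pose proof (Rabs_pos dphi).
    apply Rle_trans with (Rabs h * Rabs dphi * ((Cmod dA + 1) * Rabs h)); [|right; ring].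
    apply Rmult_le_compat_l; [nra|exact HAb].
  - apply (small_o_mul_bounded _ _ _ _ (Rabs (phi x))); [|exact HA].
    exists 1; split; [lra|]. intros. rewrite Cmod_R. lra.
Qed.

Lemma lin_approx_comp S1 S2 (phi : R -> R) (v : R -> C) r dphi L :
  lin_approxR phi r dphi -> lin_approx S2 v (phi r) L ->
  (forall h, S1 (r + h) -> S2 (phi (r + h))) ->
  lin_approx S1 (fun s => v (phi s)) r (Cmult (RtoC dphi) L).
Proof.
  intros Hp Hv HS.
  apply (small_o_ext S1 r (fun h =>
    Cplus (Cminus (Cminus (v (phi r + (phi (r + h) - phi r))) (v (phi r)))
                  (Cmult (RtoC (phi (r + h) - phi r)) L))
          (Cmult L (RtoC (phi (r + h) - phi r - h * dphi)))));
    [intros h _; replace (phi r + (phi (r + h) - phi r)) with (phi (r + h)) by ring;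
     apply injective_projections; simpl; ring|].
  apply small_o_plus.
  - apply (small_o_comp S1 S2 r (phi r) _ (fun h => phi (r + h) - phi r) (Rabs dphi + 1) Hv).
    + intros h Sh. replace (phi r + (phi (r + h) - phi r)) with (phi (r + h)) by ring. auto.
    + apply lin_approxR_Rabs_le, Hp.
  - apply (small_o_mul_bounded _ _ _ _ (Cmod L)); [|apply small_o_of_lin_approxR, Hp].
    exists 1; split; [lra|]. intros; lra.
Qed.

Lemma is_deriv_on_zero_const (f : R -> C) a b : a <= b ->
  (forall x, a <= x <= b -> is_deriv_on (Icc a b) f x (RtoC 0)) -> f b = f a.
Proof.
  intros Hab Hf.
  replace (f b) with (Cplus (Cminus (f b) (f a)) (f a)) by ring.
  rewrite (Cmod_lt_all_eq0 (Cminus (f b) (f a))); [ring|]. intros e He.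
  set (eps := e / (2 * (b - a) + 2)).
  assert (Heps : 0 < eps) by (apply Rdiv_lt_0_compat; lra).
  pose proof (mean_value_ineq_C f (fun _ => RtoC 0) (Icc a b) a b (RtoC 0) eps Hab
    (fun x Hx => Hx) Hf) as M.
  replace (Cminus (Cminus (f b) (f a)) (Cmult (RtoC (b - a)) (RtoC 0))) with (Cminus (f b) (f a))
    in M by ring.
  eapply Rle_lt_trans; [apply M|].
  - intros x _. replace (Cminus (RtoC 0) (RtoC 0)) with (RtoC 0) by ring. rewrite Cmod_0. lra.
  - apply Rlt_le_trans with (eps * (2 * (b - a) + 2)); [nra|]. right. unfold eps. field. lra.
Qed.

Lemma CInt_derive (f df : R -> C) a b : a <= b ->
  (forall x, a <= x <= b -> is_deriv_on (Icc a b) f x (df x)) -> (forall x, continuous df x) ->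
  CInt df a b = Cminus (f b) (f a).
Proof.
  intros Hab Hf Hdf.
  assert (HD : forall x, a <= x <= b ->
            is_deriv_on (Icc a b) (fun x => Cminus (CInt df a x) (f x)) x (RtoC 0)).
  { intros x Hx. replace (RtoC 0) with (Cminus (df x) (df x)) by ring.
    apply is_deriv_on_lin_approx, lin_approx_minus.
    - apply lin_approx_of_is_derive, (is_derive_RInt (V:=C_R_NormedModule) df _ a x); [|apply Hdf].
      exists (mkposreal 1 Rlt_0_1). intros z _. apply (RInt_correct (V:=C_R_CompleteNormedModule)).
      apply ex_CInt_continuous. exact Hdf.
    - apply is_deriv_on_lin_approx, Hf; auto. }
  pose proof (is_deriv_on_zero_const _ a b Hab HD) as E. cbv beta in E.
  replace (CInt df a a) with (RtoC 0) in E by (unfold CInt; rewrite RInt_point; reflexivity).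
  replace (CInt df a b) with (Cplus (Cminus (CInt df a b) (f b)) (f b)) by ring.
  rewrite E. ring.
Qed.

Lemma continuous_comp_parabola (g : R -> C) t : (forall x, continuous g x) ->
  forall x, continuous (fun r => g (t * (1 - r * r))) x.
Proof.
  intros Hg x. apply (continuous_comp (fun r => t * (1 - r * r)) g); [continuity_R|apply Hg].
Qed.

Section HalfIntegralSubstitution.

Variables (vt : R -> C) (t : R).
Hypothesis Hvt : forall x, continuous vt x.
Hypothesis Ht : 0 < t.

Lemma continuous_half_kernel s : s < t ->
  continuous (fun s => Cmult (RtoC (/ sqrt (t - s))) (vt s)) s.
Proof.
  intros Hs. apply (continuous_C_scal (fun s => / sqrt (t - s))); [|apply Hvt].
  apply continuous_Rinv_comp.
  - apply continuous_sqrt_comp. continuity_R.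
  - apply Rgt_not_eq, sqrt_lt_R0. lra.
Qed.

(* The substitution s = t (1 - r^2), ds = -2 t r dr, turns the weight 1/sqrt(t - s) into the
   constant 2 sqrt t. *)
Lemma is_RInt_half_subst b y : 0 < b < t ->
  @is_RInt C_R_NormedModule (fun s => Cmult (RtoC (/ sqrt (t - s))) (vt s)) 0 b y ->
  y = Cmult (RtoC (2 * sqrt t)) (CInt (fun r => vt (t * (1 - r * r))) (sqrt (1 - b / t)) 1).
Proof.
  intros Hb Hy. set (rb := sqrt (1 - b / t)).
  assert (Hq : 0 < b / t < 1).
  { split; [apply Rdiv_lt_0_compat; lra|].
    apply (Rmult_lt_reg_r t); [lra|]. unfold Rdiv. rewrite Rmult_assoc, Rinv_l by lra. lra. }
  assert (Hrb : 0 < rb < 1).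
  { unfold rb. split; [apply sqrt_lt_R0; lra|].
    rewrite <- sqrt_1 at 2. apply sqrt_lt_1_alt; lra. }
  assert (Hrb2 : rb * rb = 1 - b / t) by (unfold rb; apply sqrt_sqrt; lra).
  pose proof (is_RInt_comp (V:=C_R_CompleteNormedModule)
    (fun s => Cmult (RtoC (/ sqrt (t - s))) (vt s)) (fun r => t * (1 - r * r))
    (fun r => - 2 * t * r) rb 1) as Hc.
  rewrite Rmin_left, Rmax_right in Hc by lra.
  replace (t * (1 - rb * rb)) with b in Hc by (rewrite Hrb2; field; lra).
  replace (t * (1 - 1 * 1)) with 0 in Hc by ring.
  assert (Hswap : @RInt C_R_CompleteNormedModule
      (fun s => Cmult (RtoC (/ sqrt (t - s))) (vt s)) b 0 = opp y).
  { apply is_RInt_unique. apply (is_RInt_swap (V:=C_R_NormedModule)). exact Hy. }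
  rewrite Hswap in Hc.
  assert (Hsub : @is_RInt C_R_NormedModule
      (fun r => Cmult (RtoC (- 2 * sqrt t)) (vt (t * (1 - r * r)))) rb 1 (opp y)).
  { eapply is_RInt_ext; [|apply Hc].
    - intros r Hr. rewrite Rmin_left, Rmax_right in Hr by lra. cbv beta. rewrite scal_C.
      replace (t - t * (1 - r * r)) with (t * (r * r)) by ring.
      rewrite sqrt_mult, sqrt_square by nra.
      assert (0 < sqrt t) by (apply sqrt_lt_R0; lra).
      rewrite <- (sqrt_sqrt t) at 1 by lra.
      apply injective_projections; simpl; field; split; lra.
    - intros x Hx. apply continuous_half_kernel.
      assert (0 < t * (x * x)) by (apply Rmult_lt_0_compat; nra). lra.
    - intros x _. split; [auto_derive; auto; ring | continuity_R]. }
  apply (is_RInt_unique (V:=C_R_CompleteNormedModule)) in Hsub.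
  change (CInt (fun r => Cmult (RtoC (- 2 * sqrt t)) (vt (t * (1 - r * r)))) rb 1 = opp y) in Hsub.
  rewrite CInt_scal in Hsub by (apply ex_CInt_continuous, continuous_comp_parabola, Hvt).
  replace y with (opp (opp y)) by apply opp_opp. rewrite <- Hsub, opp_C.
  apply injective_projections; simpl; ring.
Qed.

Lemma is_RInt_half_trunc_near e : 0 < e -> exists eta, 0 < eta /\ forall b y, t - eta < b < t ->
  @is_RInt C_R_NormedModule (fun s => Cmult (RtoC (/ sqrt (t - s))) (vt s)) 0 b y ->
  Cmod (Cminus y (Cmult (RtoC (2 * sqrt t)) (CInt (fun r => vt (t * (1 - r * r))) 0 1))) < e.
Proof.
  intros He. set (K := 2 * sqrt t).
  assert (HK : 0 < K) by (unfold K; pose proof (sqrt_lt_R0 t Ht); lra).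
  destruct (CInt_continuous_lower _ 1 (continuous_comp_parabola vt t Hvt) (e / K))
    as [d [Hd Hd']]; [apply Rdiv_lt_0_compat; lra|].
  exists (Rmin (t * (d * d)) t). split; [apply Rmin_pos; [apply Rmult_lt_0_compat; nra | lra]|].
  intros b y Hb Hy. pose proof (Rmin_l (t * (d * d)) t). pose proof (Rmin_r (t * (d * d)) t).
  rewrite (is_RInt_half_subst b y ltac:(lra) Hy). fold K.
  replace (Cminus (Cmult (RtoC K) (CInt (fun r => vt (t * (1 - r * r))) (sqrt (1 - b / t)) 1))
                  (Cmult (RtoC K) (CInt (fun r => vt (t * (1 - r * r))) 0 1)))
    with (Cmult (RtoC K) (Cminus (CInt (fun r => vt (t * (1 - r * r))) (sqrt (1 - b / t)) 1)
                                 (CInt (fun r => vt (t * (1 - r * r))) 0 1))) by ring.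
  rewrite Cmod_mult, Cmod_R, Rabs_right by lra.
  replace e with (K * (e / K)) by (field; lra). apply Rmult_lt_compat_l; [lra|]. apply Hd'.
  rewrite Rabs_right by apply Rle_ge, sqrt_pos.
  rewrite <- (sqrt_square d) by lra. apply sqrt_lt_1_alt. split.
  - assert (b / t < 1) by (apply (Rmult_lt_reg_r t); [lra|]; unfold Rdiv;
      rewrite Rmult_assoc, Rinv_l by lra; lra). lra.
  - apply (Rmult_lt_reg_r t); [lra|]. unfold Rdiv.
    replace ((1 - b * / t) * t) with (t - b) by (field; lra). lra.
Qed.

End HalfIntegralSubstitution.

(* [Ihalf T v t] is the Riemann-Liouville half integral of [v] at [t] after the substitution
   s = t (1 - r^2); clamping the argument to [0, T] makes the integrand continuous on all of R
   without changing its values for 0 <= r <= 1. *)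
Definition parabolic_avg T (v : R -> C) t : C :=
  CInt (fun r => v (clamp 0 T (t * (1 - r * r)))) 0 1.

Definition Ihalf T (v : R -> C) t : C :=
  Cmult (RtoC (2 * sqrt t / sqrt PI)) (parabolic_avg T v t).

Lemma is_Ihalf_Ihalf (v : R -> C) T t w : 0 < t <= T -> cont_on (Icc 0 T) v ->
  is_Ihalf v t w -> w = Ihalf T v t.
Proof.
  intros Ht Hv [I [HI ->]].
  set (vt := fun s => v (clamp 0 T s)).
  assert (Hvt : forall x, continuous vt x) by (apply continuous_clamp; auto; lra).
  set (J := Cmult (RtoC (2 * sqrt t)) (CInt (fun r => vt (t * (1 - r * r))) 0 1)).
  assert (EI : I = J).
  { replace I with (Cplus (Cminus I J) J) by ring.
    rewrite (Cmod_lt_all_eq0 (Cminus I J)); [ring|]. intros e He.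
    destruct (is_RInt_half_trunc_near vt t Hvt ltac:(lra) (e / 2)) as [eta [Heta Hnear]]; [lra|].
    destruct (HI _ (locally_ball_norm (V:=C_R_NormedModule) I (mkposreal (e / 2) ltac:(lra))))
      as [Q R0 HQ [dl Hdl] HPr].
    set (m := Rmin (Rmin dl eta) t). set (b := t - m / 2).
    assert (Hm : 0 < m /\ m <= dl /\ m <= eta /\ m <= t).
    { unfold m. pose proof (Rmin_l (Rmin dl eta) t). pose proof (Rmin_r (Rmin dl eta) t).
      pose proof (Rmin_l dl eta). pose proof (Rmin_r dl eta). pose proof (cond_pos dl).
      assert (0 < Rmin (Rmin dl eta) t) by (repeat apply Rmin_pos; lra). lra. }
    assert (Rb : R0 b).
    { apply Hdl; [|unfold b; lra]. apply ball_Rabs. unfold b.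
      replace (t - m / 2 - t) with (- (m / 2)) by ring.
      rewrite Rabs_Ropp, Rabs_right; lra. }
    destruct (HPr 0 b HQ Rb) as [y [Hy Hby]]. simpl in Hy.
    unfold ball_norm in Hby. rewrite norm_C, minus_C in Hby.
    assert (Hyb : Cmod (Cminus y J) < e / 2).
    { apply (Hnear b); [unfold b; lra|]. eapply is_RInt_ext; [|exact Hy].
      intros s Hs. rewrite Rmin_left, Rmax_right in Hs by (unfold b; lra).
      unfold vt. rewrite clamp_id; auto. unfold b in Hs; lra. }
    eapply Rle_lt_trans; [apply (Cmod_minus_triangle _ y)|].
    rewrite Cmod_minus_sym. simpl in Hby. lra. }
  rewrite EI. unfold J, Ihalf, parabolic_avg, vt.
  assert (0 < sqrt PI) by (apply sqrt_lt_R0, PI_RGT_0).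
  generalize (CInt (fun r => v (clamp 0 T (t * (1 - r * r)))) 0 1). intro z.
  apply injective_projections; simpl; field; lra.
Qed.

Section TimeDerivative.

Variables (v v' : R -> C) (T : R).
Hypothesis HT : 0 <= T.
Hypothesis Hd : forall s, 0 <= s <= T -> is_deriv_on (Icc 0 T) v s (v' s).
Hypothesis Hv : cont_on (Icc 0 T) v.
Hypothesis Hv' : cont_on (Icc 0 T) v'.

Let cV t : forall x, continuous (fun r => v (clamp 0 T (t * (1 - r * r)))) x :=
  continuous_comp_parabola _ t (continuous_clamp v T HT Hv).
Let cV' t : forall x, continuous (fun r => v' (clamp 0 T (t * (1 - r * r)))) x :=
  continuous_comp_parabola _ t (continuous_clamp v' T HT Hv').

Lemma ex_CInt_weighted (w : R -> R) t : (forall x, continuous w x) ->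
  ex_CInt (fun r => Cmult (RtoC (w r)) (v' (clamp 0 T (t * (1 - r * r))))) 0 1.
Proof.
  intros Hw. apply ex_CInt_continuous. intros x. apply continuous_C_scal; [apply Hw|apply cV'].
Qed.

Lemma is_deriv_on_parabolic_avg t : 0 <= t <= T ->
  is_deriv_on (Icc 0 T) (parabolic_avg T v) t
    (CInt (fun r => Cmult (RtoC (1 - r * r)) (v' (clamp 0 T (t * (1 - r * r))))) 0 1).
Proof.
  intros Ht.
  apply (is_deriv_on_CInt_param (fun s r => v (clamp 0 T (s * (1 - r * r))))
     (fun s r => Cmult (RtoC (1 - r * r)) (v' (clamp 0 T (s * (1 - r * r))))) (Icc 0 T) t);
    [intros z _; apply ex_CInt_continuous, cV| |exact Ht|].
  { apply ex_CInt_weighted. intros x. continuity_R. }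
  intros e He. destruct (cont_on_Icc_unif T v' HT Hv' (e / 2)) as [d [Hd0 Hd']]; [lra|].
  exists d; split; auto. intros h H0 Hh Sh r Hr.
  set (sg := t * (1 - r * r)). set (h' := h * (1 - r * r)).
  assert (H1r : 0 <= 1 - r * r <= 1) by nra.
  assert (Hsg : 0 <= sg <= T) by (unfold sg; unfold Icc in Sh; nra).
  assert (Hsg' : 0 <= sg + h' <= T) by (unfold sg, h'; unfold Icc in Sh; nra).
  replace ((t + h) * (1 - r * r)) with (sg + h') by (unfold sg, h'; ring).
  rewrite !clamp_id by auto.
  assert (Hh' : Rabs h' <= Rabs h)
    by (unfold h'; rewrite Rabs_mult, (Rabs_right (1 - r * r)) by lra;
        pose proof (Rabs_pos h); nra).
  replace (Cminus (Cminus (v (sg + h')) (v sg)) (Cmult (RtoC h) (Cmult (RtoC (1 - r * r)) (v' sg))))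
    with (Cminus (Cminus (v (sg + h')) (v sg)) (Cmult (RtoC h') (v' sg)))
    by (unfold h'; apply injective_projections; simpl; ring).
  assert (Hin : forall x, Rmin sg (sg + h') <= x <= Rmax sg (sg + h') ->
                  0 <= x <= T /\ Rabs (x - sg) <= Rabs h').
  { intros x Hx. unfold Rmin, Rmax in Hx; destruct Rle_dec; split; try lra;
    unfold Rabs; repeat destruct Rcase_abs; lra. }
  eapply Rle_trans.
  - apply (mean_value_ineq_C_between v v' (Icc 0 T) sg h' (v' sg) (e / 2)).
    + intros x Hx. apply Hin; auto.
    + intros x Hx. apply Hd, Hin; auto.
    + intros x Hx. left. destruct (Hin x Hx). apply Hd'; auto. lra.
  - pose proof (Rabs_pos h'). nra.
Qed.

Lemma is_deriv_on_r_mul_parabolic t r : 0 < t <= T -> 0 <= r <= 1 ->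
  is_deriv_on (Icc 0 1) (fun s => Cmult (RtoC s) (v (clamp 0 T (t * (1 - s * s))))) r
    (Cplus (Cmult (RtoC 1) (v (clamp 0 T (t * (1 - r * r)))))
           (Cmult (RtoC r) (Cmult (RtoC (- 2 * t * r)) (v' (clamp 0 T (t * (1 - r * r))))))).
Proof.
  intros Ht Hr. apply is_deriv_on_lin_approx.
  apply (lin_approx_scal_fun (Icc 0 1) (fun s => s) (fun s => v (clamp 0 T (t * (1 - s * s)))) r 1
           (Cmult (RtoC (- 2 * t * r)) (v' (clamp 0 T (t * (1 - r * r)))))).
  { intros e He. exists 1; split; [lra|]. intros h _. replace (r + h - r - h * 1) with 0 by ring.
    rewrite Rabs_R0. pose proof (Rabs_pos h). nra. }
  apply (lin_approx_ext (Icc 0 1) (fun s => v (t * (1 - s * s)))); [| exact Hr|].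
  { intros y Hy. rewrite clamp_id; auto. unfold Icc in Hy. assert (0 <= y * y <= 1) by nra. nra. }
  assert (0 <= r * r <= 1) by nra. rewrite clamp_id by nra.
  apply (lin_approx_comp (Icc 0 1) (Icc 0 T) (fun s => t * (1 - s * s)) v r).
  - apply lin_approxR_of_is_derive. auto_derive; auto. ring.
  - apply is_deriv_on_lin_approx, Hd. nra.
  - intros h Hh. unfold Icc in *. assert (0 <= (r + h) * (r + h) <= 1) by nra. nra.
Qed.

(* Integration by parts against [r], using [v 0 = 0] at [r = 1]. *)
Lemma parabolic_avg_by_parts t : 0 < t <= T -> v 0 = RtoC 0 ->
  parabolic_avg T v t =
  Cmult (RtoC (2 * t))
    (CInt (fun r => Cmult (RtoC (r * r)) (v' (clamp 0 T (t * (1 - r * r))))) 0 1).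
Proof.
  intros Ht H0. unfold parabolic_avg.
  set (V := fun r => v (clamp 0 T (t * (1 - r * r)))).
  set (V' := fun r => v' (clamp 0 T (t * (1 - r * r)))).
  change (CInt V 0 1 = Cmult (RtoC (2 * t)) (CInt (fun r => Cmult (RtoC (r * r)) (V' r)) 0 1)).
  set (W := CInt (fun r => Cmult (RtoC (r * r)) (V' r)) 0 1).
  set (dG := fun r =>
    Cplus (Cmult (RtoC 1) (V r)) (Cmult (RtoC r) (Cmult (RtoC (- 2 * t * r)) (V' r)))).
  assert (HdG : forall x, continuous dG x).
  { intros x. apply continuous_C_plus; apply continuous_C_scal; try continuity_R.
    + apply cV.
    + apply continuous_C_scal; [continuity_R|apply cV']. }
  pose proof (CInt_derive (fun r => Cmult (RtoC r) (V r)) dG 0 1 ltac:(lra)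
    (fun r Hr => is_deriv_on_r_mul_parabolic t r Ht Hr) HdG) as F.
  assert (EG : Cminus (Cmult (RtoC 1) (V 1)) (Cmult (RtoC 0) (V 0)) = RtoC 0).
  { unfold V. replace (t * (1 - 1 * 1)) with 0 by ring. rewrite clamp_id, H0 by lra.
    apply injective_projections; simpl; ring. }
  cbv beta in F. rewrite EG in F.
  rewrite CInt_ext
    with (g := fun r => Cplus (V r) (Cmult (RtoC (- 2 * t)) (Cmult (RtoC (r * r)) (V' r))))
    in F by (intros x _; unfold dG; apply injective_projections; simpl; ring).
  rewrite CInt_plus, CInt_scal in F.
  - fold W in F. replace (CInt V 0 1) with
      (Cminus (Cplus (CInt V 0 1) (Cmult (RtoC (- 2 * t)) W)) (Cmult (RtoC (- 2 * t)) W)) by ring.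
    rewrite F. apply injective_projections; simpl; ring.
  - apply ex_CInt_weighted. intros x; continuity_R.
  - apply ex_CInt_continuous, cV.
  - apply ex_CInt_scal, ex_CInt_weighted. intros x; continuity_R.
Qed.

(* With k(s) = 2 sqrt s / sqrt pi and A = parabolic_avg: k' A = k * int r^2 v' by parts, and
   k A' = k * int (1 - r^2) v', so (k A)' = k * int v'. *)
Lemma is_deriv_on_Ihalf t : 0 < t <= T -> v 0 = RtoC 0 ->
  is_deriv_on (Ioc 0 T) (Ihalf T v) t (Ihalf T v' t).
Proof.
  intros Ht H0.
  assert (Hst : 0 < sqrt t) by (apply sqrt_lt_R0; lra).
  assert (Hsp : 0 < sqrt PI) by (apply sqrt_lt_R0, PI_RGT_0).
  set (W2 := CInt (fun r => Cmult (RtoC (r * r)) (v' (clamp 0 T (t * (1 - r * r))))) 0 1).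
  set (W1 := CInt (fun r => Cmult (RtoC (1 - r * r)) (v' (clamp 0 T (t * (1 - r * r))))) 0 1).
  assert (EV : Ihalf T v' t = Cmult (RtoC (2 * sqrt t / sqrt PI)) (Cplus W2 W1)).
  { unfold Ihalf, parabolic_avg, W1, W2.
    rewrite <- CInt_plus by (apply ex_CInt_weighted; intros x; continuity_R).
    f_equal. apply CInt_ext. intros x _. apply injective_projections; simpl; ring. }
  rewrite EV. apply is_deriv_on_lin_approx.
  replace (Cmult (RtoC (2 * sqrt t / sqrt PI)) (Cplus W2 W1)) with
    (Cplus (Cmult (RtoC (/ (sqrt t * sqrt PI))) (parabolic_avg T v t))
           (Cmult (RtoC (2 * sqrt t / sqrt PI)) W1)).
  - apply (lin_approx_scal_fun _ (fun s => 2 * sqrt s / sqrt PI) (parabolic_avg T v)).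
    + apply lin_approxR_of_is_derive. auto_derive; [lra|]. field. lra.
    + apply is_deriv_on_lin_approx.
      apply (is_deriv_on_subset (Icc 0 T)); [unfold Icc, Ioc; intros; lra|].
      apply is_deriv_on_parabolic_avg; lra.
  - rewrite parabolic_avg_by_parts by auto. fold W2.
    rewrite <- (sqrt_sqrt t) at 2 by lra.
    apply injective_projections; simpl; field; lra.
Qed.

End TimeDerivative.

Section SpaceDerivative.

Variables (p q T t : R).
Hypothesis HT : 0 <= T.

Lemma is_deriv_on_parabolic_avg_param (G G' : R -> R -> C) y :
  (forall z tau, Icc p q z -> 0 <= tau <= T ->
     is_deriv_on (Icc p q) (fun z => G z tau) z (G' z tau)) ->
  joint_cont_on (Icc p q) T G -> joint_cont_on (Icc p q) T G' -> Icc p q y ->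
  is_deriv_on (Icc p q) (fun z => parabolic_avg T (G z) t) y (parabolic_avg T (G' y) t).
Proof.
  intros HG' HcG HcG' Hy.
  apply (is_deriv_on_CInt_param (fun z r => G z (clamp 0 T (t * (1 - r * r))))
    (fun z r => G' z (clamp 0 T (t * (1 - r * r)))) (Icc p q) y); [| |exact Hy|].
  - intros z Hz. apply ex_CInt_continuous, (continuous_comp_parabola (fun s => G z (clamp 0 T s))).
    apply continuous_clamp; auto. apply (joint_cont_on_slice (Icc p q) T G); auto.
  - apply ex_CInt_continuous, (continuous_comp_parabola (fun s => G' y (clamp 0 T s))).
    apply continuous_clamp; auto. apply (joint_cont_on_slice (Icc p q) T G'); auto.
  - intros e He.
    destruct (joint_cont_unif_in_param G' (Icc p q) y 0 T Hy) with (e := e / 2)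
      as [d [Hd0 Hd']]; [|lra|].
    { intros t0 Ht0 e' He'. destruct (HcG' y t0 Hy Ht0 e' He') as [d [Hd0 Hd']].
      exists d; split; auto. }
    exists d; split; auto. intros h H0 Hh Sh r Hr.
    set (tau := clamp 0 T (t * (1 - r * r))).
    assert (Htau : 0 <= tau <= T) by (apply clamp_in; auto).
    replace (e * Rabs h) with (2 * (e / 2) * Rabs h) by field.
    assert (Hin : forall x, Rmin y (y + h) <= x <= Rmax y (y + h) -> Icc p q x).
    { intros x Hx. unfold Icc in *. unfold Rmin, Rmax in Hx; destruct Rle_dec; lra. }
    assert (Hcl : forall x, Rmin y (y + h) <= x <= Rmax y (y + h) -> Rabs (x - y) < d).
    { intros x Hx. eapply Rle_lt_trans; [|exact Hh]. unfold Rmin, Rmax in Hx; destruct Rle_dec;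
      unfold Rabs; repeat destruct Rcase_abs; lra. }
    apply (mean_value_ineq_C_between (fun z => G z tau) (fun z => G' z tau) (Icc p q) y h
             (G' y tau) (e / 2)); auto.
    intros x Hx. left. apply Hd'; auto.
Qed.

Lemma Ihalf_deriv2_eq (w : R -> C) (G G' G'' : R -> R -> C) y d : p < q -> Icc p q y ->
  (forall z tau, Icc p q z -> 0 <= tau <= T ->
     is_deriv_on (Icc p q) (fun z => G z tau) z (G' z tau)) ->
  (forall z tau, Icc p q z -> 0 <= tau <= T ->
     is_deriv_on (Icc p q) (fun z => G' z tau) z (G'' z tau)) ->
  joint_cont_on (Icc p q) T G -> joint_cont_on (Icc p q) T G' -> joint_cont_on (Icc p q) T G'' ->
  (forall z, Icc p q z -> w z = Ihalf T (G z) t) ->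
  is_deriv2_on (Icc p q) w y d -> d = Ihalf T (G'' y) t.
Proof.
  intros Hpq Hy HG' HG'' HcG HcG' HcG'' Hw [g [Hg1 Hg2]].
  assert (Hg : forall z, Icc p q z -> g z = Ihalf T (G' z) t).
  { intros z Hz. apply (is_deriv_on_unique (Icc p q) w z); [apply Hg1; auto| |].
    - apply (is_deriv_on_ext (Icc p q) (fun z => Ihalf T (G z) t)); [intros; symmetry; auto|auto|].
      apply is_deriv_on_scal, is_deriv_on_parabolic_avg_param; auto.
    - apply Icc_points_near; auto. }
  apply (is_deriv_on_unique (Icc p q) (fun z => Ihalf T (G' z) t) y);
    [apply (is_deriv_on_ext _ g); auto| |apply Icc_points_near; auto].
  apply is_deriv_on_scal.
  apply (is_deriv_on_parabolic_avg_param G' G''); auto.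
Qed.

End SpaceDerivative.

Lemma Ihalf_time_deriv_eq (w v v' : R -> C) T t D : 0 < t <= T ->
  (forall s, 0 <= s <= T -> is_deriv_on (Icc 0 T) v s (v' s)) ->
  cont_on (Icc 0 T) v -> cont_on (Icc 0 T) v' -> v 0 = RtoC 0 ->
  (forall s, Ioc 0 T s -> w s = Ihalf T v s) ->
  is_deriv_on (Ioc 0 T) w t D -> D = Ihalf T v' t.
Proof.
  intros Ht Hd Hv Hv' H0 Hw HD.
  apply (is_deriv_on_unique (Ioc 0 T) w t); [exact HD| |apply Ioc_points_near; exact Ht].
  apply (is_deriv_on_ext _ (Ihalf T v)); [intros s Hs; symmetry; auto|exact Ht|].
  apply is_deriv_on_Ihalf; auto; lra.
Qed.

Lemma Ihalf_combination_eq0 T (a b c : R -> C) t : 0 < t <= T ->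
  cont_on (Icc 0 T) a -> cont_on (Icc 0 T) b -> cont_on (Icc 0 T) c ->
  (forall s, Ioc 0 T s -> (Ci * c s + a s + b s)%C = RtoC 0) ->
  Cplus (Cplus (Ihalf T a t) (Ihalf T b t)) (Cmult Ci (Ihalf T c t)) = RtoC 0.
Proof.
  intros Ht Ha Hb Hc Habc.
  assert (Hex : forall f, cont_on (Icc 0 T) f ->
            ex_CInt (fun r => f (clamp 0 T (t * (1 - r * r)))) 0 1).
  { intros f Hf. apply ex_CInt_continuous, (continuous_comp_parabola (fun s => f (clamp 0 T s))).
    apply continuous_clamp; auto; lra. }
  assert (E : CInt (fun r => Cplus (Cplus (a (clamp 0 T (t * (1 - r * r))))
                                          (b (clamp 0 T (t * (1 - r * r)))))
                                   (Cmult Ci (c (clamp 0 T (t * (1 - r * r)))))) 0 1 = RtoC 0).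
  { rewrite (CInt_ext _ (fun _ => RtoC 0)).
    - unfold CInt. rewrite RInt_const.
      apply injective_projections; simpl; unfold scal; simpl; unfold mult; simpl; ring.
    - intros r Hr. rewrite Rmin_left, Rmax_right in Hr by lra.
      assert (0 < t * (1 - r * r) <= T) by (split; [apply Rmult_lt_0_compat; nra|nra]).
      rewrite clamp_id by lra. rewrite <- (Habc (t * (1 - r * r))) by (unfold Ioc; lra). ring. }
  rewrite CInt_plus, CInt_plus, CInt_Ci in E
    by auto using ex_CInt_plus, ex_CInt_Ci.
  unfold Ihalf, parabolic_avg.
  set (Ia := CInt (fun r => a (clamp 0 T (t * (1 - r * r)))) 0 1) in *.
  set (Ib := CInt (fun r => b (clamp 0 T (t * (1 - r * r)))) 0 1) in *.
  set (Ic := CInt (fun r => c (clamp 0 T (t * (1 - r * r)))) 0 1) in *.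
  transitivity (Cmult (RtoC (2 * sqrt t / sqrt PI)) (Cplus (Cplus Ia Ib) (Cmult Ci Ic))); [ring|].
  rewrite E. ring.
Qed.

Section Cylinder.

Variables (xl xr xb xt T : R).

Lemma cont_on_cyl_eps f x1 x2 t :
  cont_on_cyl xl xr xb xt T f -> Cyl xl xr xb xt T (x1, x2, t) ->
  forall e, 0 < e -> exists d, 0 < d /\ forall y1 y2 s, Cyl xl xr xb xt T (y1, y2, s) ->
    Rabs (y1 - x1) < d -> Rabs (y2 - x2) < d -> Rabs (s - t) < d ->
    Cmod (Cminus (f y1 y2 s) (f x1 x2 t)) < e.
Proof.
  intros Hf Hc e He. specialize (Hf _ Hc). unfold continuous in Hf.
  destruct (proj1 (filterlim_locally_ball_norm (K:=R_AbsRing) (U:=C_R_NormedModule) _ _) Hf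
    (mkposreal _ He)) as [d Hd].
  exists d; split; [apply cond_pos|]. intros y1 y2 s Hcy H1 H2 H3.
  specialize (Hd (y1, y2, s)). unfold ball_norm in Hd. rewrite norm_C in Hd. apply Hd; auto.
  split; [split|]; apply ball_Rabs; auto.
Qed.

Lemma cont_on_cyl_time f y1 y2 : cont_on_cyl xl xr xb xt T f ->
  Icc xl xr y1 -> Icc xb xt y2 -> cont_on (Icc 0 T) (f y1 y2).
Proof.
  intros Hf H1 H2 s Hs e He.
  destruct (cont_on_cyl_eps f y1 y2 s Hf (conj H1 (conj H2 Hs)) e He) as [d [Hd Hd']].
  exists d; split; auto. intros s' Hs' Hss.
  apply Hd'; [exact (conj H1 (conj H2 Hs'))| | |exact Hss]; rewrite Rminus_diag, Rabs_R0; auto.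
Qed.

Lemma joint_cont_on_cyl_x2 f x1 : cont_on_cyl xl xr xb xt T f -> Icc xl xr x1 ->
  joint_cont_on (Icc xb xt) T (f x1).
Proof.
  intros Hf H1 z tau Hz Htau e He.
  destruct (cont_on_cyl_eps f x1 z tau Hf (conj H1 (conj Hz Htau)) e He) as [d [Hd Hd']].
  exists d; split; auto. intros z' tau' Hz' Htau' Hzz Htt.
  apply Hd'; [exact (conj H1 (conj Hz' Htau'))| |exact Hzz|exact Htt].
  rewrite Rminus_diag, Rabs_R0; auto.
Qed.

Lemma joint_cont_on_cyl_x1 f x2 : cont_on_cyl xl xr xb xt T f -> Icc xb xt x2 ->
  joint_cont_on (Icc xl xr) T (fun z => f z x2).
Proof.
  intros Hf H2 z tau Hz Htau e He.
  destruct (cont_on_cyl_eps f z x2 tau Hf (conj Hz (conj H2 Htau)) e He) as [d [Hd Hd']].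
  exists d; split; auto. intros z' tau' Hz' Htau' Hzz Htt.
  apply Hd'; [exact (conj Hz' (conj H2 Htau'))|exact Hzz| |exact Htt].
  rewrite Rminus_diag, Rabs_R0; auto.
Qed.

Lemma cyl_Ihalf_time_deriv_eq (f ft : R -> R -> R -> C) (w : R -> C) x1 x2 t D :
  0 < t <= T -> Icc xl xr x1 -> Icc xb xt x2 ->
  (forall x1 x2 s, Cyl xl xr xb xt T (x1, x2, s) ->
     is_deriv_on (Icc 0 T) (fun s => f x1 x2 s) s (ft x1 x2 s)) ->
  cont_on_cyl xl xr xb xt T f -> cont_on_cyl xl xr xb xt T ft -> f x1 x2 0 = RtoC 0 ->
  (forall s, Ioc 0 T s -> w s = Ihalf T (f x1 x2) s) ->
  is_deriv_on (Ioc 0 T) w t D -> D = Ihalf T (ft x1 x2) t.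
Proof.
  intros Ht H1 H2 Hft Hf Hft' H0.
  apply (Ihalf_time_deriv_eq w (f x1 x2) (ft x1 x2) T t D Ht); auto using cont_on_cyl_time.
  intros s Hs. apply Hft. exact (conj H1 (conj H2 Hs)).
Qed.

Lemma cyl_Ihalf_deriv2_x2_eq (f f2 f22 : R -> R -> R -> C) (w : R -> C) x1 x2 t d :
  xb < xt -> 0 <= T -> Icc xl xr x1 -> Icc xb xt x2 ->
  (forall x1 x2 s, Cyl xl xr xb xt T (x1, x2, s) ->
     is_deriv_on (Icc xb xt) (fun y => f x1 y s) x2 (f2 x1 x2 s)) ->
  (forall x1 x2 s, Cyl xl xr xb xt T (x1, x2, s) ->
     is_deriv_on (Icc xb xt) (fun y => f2 x1 y s) x2 (f22 x1 x2 s)) ->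
  cont_on_cyl xl xr xb xt T f -> cont_on_cyl xl xr xb xt T f2 -> cont_on_cyl xl xr xb xt T f22 ->
  (forall z, Icc xb xt z -> w z = Ihalf T (f x1 z) t) ->
  is_deriv2_on (Icc xb xt) w x2 d -> d = Ihalf T (f22 x1 x2) t.
Proof.
  intros Hy HT H1 H2 Hf2 Hf22 Hf Hf2' Hf22'.
  apply (Ihalf_deriv2_eq xb xt T t HT w (f x1) (f2 x1) (f22 x1)); auto using joint_cont_on_cyl_x2.
  - intros z tau Hz Htau. apply Hf2. exact (conj H1 (conj Hz Htau)).
  - intros z tau Hz Htau. apply Hf22. exact (conj H1 (conj Hz Htau)).
Qed.

Lemma cyl_Ihalf_deriv2_x1_eq (f f1 f11 : R -> R -> R -> C) (w : R -> C) x1 x2 t d :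
  xl < xr -> 0 <= T -> Icc xl xr x1 -> Icc xb xt x2 ->
  (forall x1 x2 s, Cyl xl xr xb xt T (x1, x2, s) ->
     is_deriv_on (Icc xl xr) (fun y => f y x2 s) x1 (f1 x1 x2 s)) ->
  (forall x1 x2 s, Cyl xl xr xb xt T (x1, x2, s) ->
     is_deriv_on (Icc xl xr) (fun y => f1 y x2 s) x1 (f11 x1 x2 s)) ->
  cont_on_cyl xl xr xb xt T f -> cont_on_cyl xl xr xb xt T f1 -> cont_on_cyl xl xr xb xt T f11 ->
  (forall z, Icc xl xr z -> w z = Ihalf T (fun s => f z x2 s) t) ->
  is_deriv2_on (Icc xl xr) w x1 d -> d = Ihalf T (f11 x1 x2) t.
Proof.
  intros Hx HT H1 H2 Hf1 Hf11 Hf Hf1' Hf11'.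
  apply (Ihalf_deriv2_eq xl xr T t HT w (fun z => f z x2) (fun z => f1 z x2) (fun z => f11 z x2));
    auto using joint_cont_on_cyl_x1.
  - intros z tau Hz Htau. apply Hf1. exact (conj Hz (conj H2 Htau)).
  - intros z tau Hz Htau. apply Hf11. exact (conj Hz (conj H2 Htau)).
Qed.

End Cylinder.

Lemma corner_identity (A B D d1 d2 : C) :
  (A + cexpi (- (PI / 4)) * D - RtoC (/ 2) * cexpi (PI / 4) * d2)%C = RtoC 0 ->
  (B + cexpi (- (PI / 4)) * D - RtoC (/ 2) * cexpi (PI / 4) * d1)%C = RtoC 0 ->
  Cplus (Cplus d1 d2) (Cmult Ci D) = RtoC 0 ->
  (A + B + RtoC (3 / 2) * cexpi (- (PI / 4)) * D)%C = RtoC 0.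
Proof.
  intros E1 E2 E3.
  assert (E4 : Cplus (Cmult (cexpi (PI / 4)) Ci) (cexpi (- (PI / 4))) = RtoC 0).
  { unfold cexpi. rewrite cos_neg, sin_neg, sin_PI4, cos_PI4.
    apply injective_projections; simpl; ring. }
  replace (RtoC (3 / 2)) with (1 + 1 - RtoC (/ 2))%C
    by (apply injective_projections; simpl; field).
  set (c := cexpi (- (PI / 4))) in *. set (c' := cexpi (PI / 4)) in *. set (h := RtoC (/ 2)) in *.
  transitivity (Cminus (Cplus (Cplus (A + c * D - h * c' * d2) (B + c * D - h * c' * d1))
                              (h * c' * Cplus (Cplus d1 d2) (Cmult Ci D)))
                       (h * Cplus (Cmult c' Ci) c * D))%C; [ring|].
  rewrite E1, E2, E3, E4. ring.
Qed.

Theorem mainTheorem2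
  (xl xr xb xt T : R) (Hx : (xl < xr)%R) (Hy : (xb < xt)%R) (HT : (0 < T)%R)
  (u ut u1 u2 u11 u12 u21 u22 : R -> R -> R -> C)
  (* ut, u1, u2, u11, u12, u21, u22 are the partial derivatives of u on the closed
     cylinder closure(Omega) x [0,T] (one-sided on its boundary) *)
  (Hut : forall x1 x2 t, Cyl xl xr xb xt T (x1, x2, t) ->
           is_deriv_on (Icc 0 T) (fun s => u x1 x2 s) t (ut x1 x2 t))
  (Hu1 : forall x1 x2 t, Cyl xl xr xb xt T (x1, x2, t) ->
           is_deriv_on (Icc xl xr) (fun y => u y x2 t) x1 (u1 x1 x2 t))
  (Hu2 : forall x1 x2 t, Cyl xl xr xb xt T (x1, x2, t) ->
           is_deriv_on (Icc xb xt) (fun y => u x1 y t) x2 (u2 x1 x2 t))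
  (Hu11 : forall x1 x2 t, Cyl xl xr xb xt T (x1, x2, t) ->
           is_deriv_on (Icc xl xr) (fun y => u1 y x2 t) x1 (u11 x1 x2 t))
  (Hu12 : forall x1 x2 t, Cyl xl xr xb xt T (x1, x2, t) ->
           is_deriv_on (Icc xb xt) (fun y => u1 x1 y t) x2 (u12 x1 x2 t))
  (Hu21 : forall x1 x2 t, Cyl xl xr xb xt T (x1, x2, t) ->
           is_deriv_on (Icc xl xr) (fun y => u2 y x2 t) x1 (u21 x1 x2 t))
  (Hu22 : forall x1 x2 t, Cyl xl xr xb xt T (x1, x2, t) ->
           is_deriv_on (Icc xb xt) (fun y => u2 x1 y t) x2 (u22 x1 x2 t))
  (* continuity of u, d_t u and all spatial derivatives up to order 2 *)
  (Hc : cont_on_cyl xl xr xb xt T u /\ cont_on_cyl xl xr xb xt T ut /\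
         cont_on_cyl xl xr xb xt T u1 /\ cont_on_cyl xl xr xb xt T u2 /\
         cont_on_cyl xl xr xb xt T u11 /\ cont_on_cyl xl xr xb xt T u12 /\
         cont_on_cyl xl xr xb xt T u21 /\ cont_on_cyl xl xr xb xt T u22)
  (* zero initial data on the boundary of Omega *)
  (Hinit : forall x1 x2, Icc xl xr x1 -> Icc xb xt x2 ->
           (x1 = xl \/ x1 = xr \/ x2 = xb \/ x2 = xt) -> u x1 x2 0%R = RtoC 0)
  (* Schroedinger equation on closure(Omega) x (0,T] *)
  (Hpde : forall x1 x2 t, Icc xl xr x1 -> Icc xb xt x2 -> Ioc 0 T t ->
           (Ci * ut x1 x2 t + u11 x1 x2 t + u22 x1 x2 t)%C = RtoC 0)
  (* W = d_t^{-1/2} u, computed pointwise in x *)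
  (W : R -> R -> R -> C)
  (HW : forall x1 x2 t, Icc xl xr x1 -> Icc xb xt x2 -> Ioc 0 T t ->
           is_Ihalf (fun s => u x1 x2 s) t (W x1 x2 t))
  (* high-frequency boundary conditions on the closed vertical edges *)
  (HBCv : forall (a : bool) x2 t, Icc xb xt x2 -> Ioc 0 T t ->
     let x1 := if a then xr else xl in
     let dn := if a then u1 x1 x2 t else (- u1 x1 x2 t)%C in
     exists D d2 : C,
       is_deriv_on (Ioc 0 T) (fun s => W x1 x2 s) t D /\
       is_deriv2_on (Icc xb xt) (fun y => W x1 y t) x2 d2 /\
       (dn + cexpi (- (PI / 4)) * D - RtoC (/ 2) * cexpi (PI / 4) * d2)%C = RtoC 0)
  (* high-frequency boundary conditions on the closed horizontal edges *)
  (HBCh : forall (b : bool) x1 t, Icc xl xr x1 -> Ioc 0 T t ->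
     let x2 := if b then xt else xb in
     let dn := if b then u2 x1 x2 t else (- u2 x1 x2 t)%C in
     exists D d1 : C,
       is_deriv_on (Ioc 0 T) (fun s => W x1 x2 s) t D /\
       is_deriv2_on (Icc xl xr) (fun y => W y x2 t) x1 d1 /\
       (dn + cexpi (- (PI / 4)) * D - RtoC (/ 2) * cexpi (PI / 4) * d1)%C = RtoC 0) :
  (* corner compatibility condition at the four corners *)
  forall (a b : bool) t, Ioc 0 T t ->
    let x1 := if a then xr else xl in
    let x2 := if b then xt else xb in
    let dna := if a then u1 x1 x2 t else (- u1 x1 x2 t)%C in
    let dnb := if b then u2 x1 x2 t else (- u2 x1 x2 t)%C in
    exists D : C,
      is_deriv_on (Ioc 0 T) (fun s => W x1 x2 s) t D /\
      (dna + dnb + RtoC (3 / 2) * cexpi (- (PI / 4)) * D)%C = RtoC 0.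
Proof.
  intros a b t Ht. cbv zeta.
  destruct Hc as [cu [cut [cu1 [cu2 [cu11 [_ [_ cu22]]]]]]].
  assert (Ht' : 0 < t <= T) by (unfold Ioc in Ht; lra).
  set (x1 := if a then xr else xl). set (x2 := if b then xt else xb).
  assert (Hx1 : Icc xl xr x1) by (unfold x1, Icc; destruct a; lra).
  assert (Hx2 : Icc xb xt x2) by (unfold x2, Icc; destruct b; lra).
  assert (HWI : forall y1 y2 s, Icc xl xr y1 -> Icc xb xt y2 -> Ioc 0 T s ->
                  W y1 y2 s = Ihalf T (u y1 y2) s).
  { intros y1 y2 s H1 H2 Hs. unfold Ioc in Hs.
    apply is_Ihalf_Ihalf; [lra | apply (cont_on_cyl_time xl xr xb xt); auto | apply HW; auto]. }
  assert (Hu0 : u x1 x2 0 = RtoC 0) by (apply Hinit; auto; unfold x1; destruct a; auto).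
  destruct (HBCv a x2 t Hx2 Ht) as [D [d2 [HD [Hd2 E1]]]].
  destruct (HBCh b x1 t Hx1 Ht) as [D' [d1 [HD' [Hd1 E2]]]].
  pose proof (cyl_Ihalf_time_deriv_eq xl xr xb xt T u ut _ x1 x2 t D Ht' Hx1 Hx2 Hut cu cut Hu0
    (fun s Hs => HWI x1 x2 s Hx1 Hx2 Hs) HD) as ED.
  pose proof (cyl_Ihalf_time_deriv_eq xl xr xb xt T u ut _ x1 x2 t D' Ht' Hx1 Hx2 Hut cu cut Hu0
    (fun s Hs => HWI x1 x2 s Hx1 Hx2 Hs) HD') as ED'.
  pose proof (cyl_Ihalf_deriv2_x2_eq xl xr xb xt T u u2 u22 _ x1 x2 t d2 Hy ltac:(lra) Hx1 Hx2
    Hu2 Hu22 cu cu2 cu22 (fun z Hz => HWI x1 z t Hx1 Hz Ht) Hd2) as Ed2.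
  pose proof (cyl_Ihalf_deriv2_x1_eq xl xr xb xt T u u1 u11 _ x1 x2 t d1 Hx ltac:(lra) Hx1 Hx2
    Hu1 Hu11 cu cu1 cu11 (fun z Hz => HWI z x2 t Hz Hx2 Ht) Hd1) as Ed1.
  exists D. split; [exact HD|].
  rewrite ED', <- ED in E2. apply (corner_identity _ _ D d1 d2 E1 E2).
  rewrite Ed1, Ed2, ED.
  apply Ihalf_combination_eq0; auto; apply (cont_on_cyl_time xl xr xb xt); auto.
Qed.
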